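(* For $m \geq 4$, a fan-crossing free $m$-star has at most $2m-8$ long arrows.
   Context: An $m$-star is a regular $m$-gon $P$ together with a finite set of arrows. Label the vertices of $P$ counter-clockwise $v_1,\dots,v_m$ and let $e_i = v_iv_{i+1}$ (indices modulo $m$) be its boundary edges. An arrow is a ray segment starting at a vertex $v_i$ of $P$, pointing into the interior of $P$, and ending where it exits $P$ through (the relative interior of) a boundary edge $e_j$ not incident to $v_i$; several arrows may start at the same vertex. Two elements among the boundary edges and arrows intersect if they share a point other than a common endpoint vertex; in particular an arrow intersects the edge through which it exits. An element is incident to a vertex $v$ if $v$ is one of its endpoints (an arrow is incident only to its starting vertex). The $m$-star is ($2$-)fan-crossing free if no edge or arrow intersects two elements (arrows or edges) that are incident to the same vertex. An arrow starting at $v_i$ and exiting through $e_j$ splits the boundary of $P$ into the two chains $v_{i+1},\dots,v_j$ and $v_{j+1},\dots,v_{i-1}$; its length is the number of vertices on the shorter of these chains. An arrow is short if its length is one and long if its length is larger than one. *)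

From Stdlib Require Import Reals Lra Lia List Arith.
Open Scope R_scope.

(* Vertices indexed 0..m-1 (the paper's v_1..v_m), counter-clockwise on the unit circle. *)
Definition vx (m k : nat) : R := cos (2 * PI * INR k / INR m).
Definition vy (m k : nat) : R := sin (2 * PI * INR k / INR m).

Definition on_seg (ax ay bx by_ px py : R) : Prop :=
  exists t : R, 0 <= t <= 1 /\ px = ax + t * (bx - ax) /\ py = ay + t * (by_ - ay).

(* An arrow: starts at vertex a_src, exits through the relative interior of
   edge e_{a_edge} = v_{a_edge} v_{a_edge+1 mod m} at parameter a_par in (0,1). *)
Record arrow : Type := mkArrow { a_src : nat; a_edge : nat; a_par : R }.

Definition succ_mod (m k : nat) : nat := Nat.modulo (S k) m.

Definition exit_x (m : nat) (a : arrow) : R :=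
  vx m (a_edge a) + a_par a * (vx m (succ_mod m (a_edge a)) - vx m (a_edge a)).
Definition exit_y (m : nat) (a : arrow) : R :=
  vy m (a_edge a) + a_par a * (vy m (succ_mod m (a_edge a)) - vy m (a_edge a)).

Definition valid_arrow (m : nat) (a : arrow) : Prop :=
  (a_src a < m)%nat /\ (a_edge a < m)%nat /\ 0 < a_par a < 1 /\
  a_edge a <> a_src a /\ succ_mod m (a_edge a) <> a_src a.

Inductive elem : Type := Edge (k : nat) | Arr (a : arrow).

Definition is_elem (m : nat) (A : list arrow) (X : elem) : Prop :=
  match X with Edge k => (k < m)%nat | Arr a => In a A end.

Definition incident (m : nat) (X : elem) (v : nat) : Prop :=
  match X with
  | Edge k => v = k \/ v = succ_mod m k
  | Arr a => v = a_src a
  end.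

Definition on_elem (m : nat) (X : elem) (px py : R) : Prop :=
  match X with
  | Edge k => on_seg (vx m k) (vy m k) (vx m (succ_mod m k)) (vy m (succ_mod m k)) px py
  | Arr a => on_seg (vx m (a_src a)) (vy m (a_src a)) (exit_x m a) (exit_y m a) px py
  end.

Definition intersects (m : nat) (X Y : elem) : Prop :=
  X <> Y /\
  exists px py : R, on_elem m X px py /\ on_elem m Y px py /\
    ~ (exists v : nat, (v < m)%nat /\ px = vx m v /\ py = vy m v /\
                       incident m X v /\ incident m Y v).

Definition is_star (m : nat) (A : list arrow) : Prop :=
  NoDup A /\ Forall (valid_arrow m) A.

Definition fan_crossing_free (m : nat) (A : list arrow) : Prop :=
  forall (X Y Z : elem) (v : nat),
    is_elem m A X -> is_elem m A Y -> is_elem m A Z -> Y <> Z -> (v < m)%nat ->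
    incident m Y v -> incident m Z v ->
    ~ (intersects m X Y /\ intersects m X Z).

(* length: vertices on the shorter chain v_{i+1..j} / v_{j+1..i-1} *)
Definition arrow_length (m : nat) (a : arrow) : nat :=
  let d := Nat.modulo (a_edge a + m - a_src a) m in
  Nat.min d (m - 1 - d).

Definition is_long (m : nat) (a : arrow) : bool := Nat.ltb 1 (arrow_length m a).

From Stdlib Require Import Reals Lra Lia List Arith Bool Classical FinFun.

(* A star is abstracted to points of a circle, encoded as
   natural numbers in cyclic order: vertex positions [V] and arrows [A], each a
   pair (source vertex, exit position).  The bound
   2|V| - 8 on long arrows ([star_long_bound]) is proved by strong induction on
   |V|: some long arrow is good ([good_exists]); rotated to start at position 0
   it cuts the star into a left and a right star ([Star_L], [Star_R]) with
   |V_L| + |V_R| = |V| + 3, which keep every long arrow except the cut one and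
   at most one further arrow ([bound_split]).

   In the regular m-gon three vertices in
   counter-clockwise order are positively oriented ([vertex_orient_pos]); this
   locates every vertex and exit point relative to the line of an arrow
   ([side_vertex_neg] ...), so that arrows whose encodings interleave really
   intersect ([inter_intersects]).  Hence the encoding of a fan-crossing free
   m-star is an abstract star on m vertices ([encoding_star]) in which all long
   arrows stay long ([encoding_long]), and [lemma2] follows. *)

Open Scope nat_scope.

Lemma length_filter_mono {T} (f g : T -> bool) l :
  (forall x, In x l -> f x = true -> g x = true) -> length (filter f l) <= length (filter g l).
Proof.
  induction l as [|h l IH]; simpl; intros H; auto.
  assert (IH' := IH (fun x Hx => H x (or_intror Hx))).
  destruct (f h) eqn:Ef.
  - rewrite (H h (or_introl eq_refl) Ef). simpl. lia.
  - destruct (g h); simpl; lia.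
Qed.

Lemma length_filter_lt {T} (f g : T -> bool) l :
  (forall x, In x l -> f x = true -> g x = true) ->
  (exists x, In x l /\ g x = true /\ f x = false) -> length (filter f l) < length (filter g l).
Proof.
  induction l as [|h l IH]; simpl; intros H [x [Hx [Gx Fx]]]; [contradiction|].
  destruct Hx as [<-|Hx].
  - rewrite Fx, Gx. simpl.
    assert (length (filter f l) <= length (filter g l)) by (apply length_filter_mono; auto).
    lia.
  - assert (IH' := IH (fun y Hy => H y (or_intror Hy)) (ex_intro _ x (conj Hx (conj Gx Fx)))).
    destruct (f h) eqn:Ef.
    + rewrite (H h (or_introl eq_refl) Ef). simpl. lia.
    + destruct (g h); simpl; lia.
Qed.

Lemma length_filter_pos {T} (f : T -> bool) l x : In x l -> f x = true -> 1 <= length (filter f l).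
Proof.
  intros Hx Fx. assert (In x (filter f l)) by (apply filter_In; auto).
  destruct (filter f l); simpl in *; [contradiction|lia].
Qed.

Lemma length_filter_pos_inv {T} (f : T -> bool) l :
  1 <= length (filter f l) -> exists x, In x l /\ f x = true.
Proof.
  intros H. destruct (filter f l) as [|y r] eqn:E; simpl in H; [lia|].
  exists y. apply filter_In. rewrite E. simpl; auto.
Qed.

Lemma length_filter_two {T} (f : T -> bool) l x y :
  In x l -> In y l -> x <> y -> f x = true -> f y = true -> 2 <= length (filter f l).
Proof.
  intros Hx Hy Hxy Fx Fy.
  assert (Hx' : In x (filter f l)) by (apply filter_In; auto).
  assert (Hy' : In y (filter f l)) by (apply filter_In; auto).
  clear Hx Hy.
  destruct (filter f l) as [|a [|b r]]; simpl in *; try contradiction; try lia.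
  destruct Hx' as [<-|[]]; destruct Hy' as [<-|[]]; congruence.
Qed.

Lemma length_filter_none {T} (f : T -> bool) l :
  (forall x, In x l -> f x = false) -> length (filter f l) = 0.
Proof. induction l as [|h l IH]; simpl; intros H; auto. rewrite H by auto. auto. Qed.

Lemma length_filter_all {T} (f : T -> bool) l :
  (forall x, In x l -> f x = true) -> length (filter f l) = length l.
Proof. induction l as [|h l IH]; simpl; intros H; auto. rewrite H by auto. simpl. rewrite IH; auto. Qed.

Lemma length_filter_orb {T} (f g : T -> bool) l :
  (forall x, In x l -> f x = true -> g x = true -> False) ->
  length (filter (fun x => f x || g x) l) = length (filter f l) + length (filter g l).
Proof.
  induction l as [|h l IH]; intros H; [reflexivity|].
  assert (IH' := IH (fun x Hx => H x (or_intror Hx))).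
  cbn [filter]. destruct (f h) eqn:F, (g h) eqn:G; cbn [orb length]; try lia.
  exfalso; eapply H; [left; reflexivity| |]; eauto.
Qed.

Lemma length_filter_single (l : list nat) s :
  NoDup l -> In s l -> length (filter (fun v => v =? s) l) = 1.
Proof.
  induction l as [|h l IH]; simpl; intros N Hs; [contradiction|].
  inversion N as [|x0 l0 Hn N2]; subst.
  destruct (Nat.eqb_spec h s).
  - subst. simpl. f_equal. apply length_filter_none.
    intros v Hv. apply Nat.eqb_neq. intro; subst; contradiction.
  - destruct Hs as [|Hs]; [congruence|]. auto.
Qed.

Lemma length_filter_filter {T} (f g : T -> bool) l :
  length (filter f (filter g l)) = length (filter (fun x => g x && f x) l).
Proof. induction l as [|h l IH]; simpl; auto. destruct (g h); simpl; auto. destruct (f h); simpl; auto. Qed.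

Lemma length_filter_cover {T} (P Q R : T -> bool) l :
  (forall x, In x l -> P x = true -> Q x = true \/ R x = true) ->
  length (filter P l) <= length (filter Q l) + length (filter R l).
Proof.
  induction l as [|h l IH]; simpl; intros H; auto.
  assert (IH' := IH (fun x Hx => H x (or_intror Hx))).
  destruct (P h) eqn:Ph.
  - destruct (H h (or_introl eq_refl) Ph) as [E|E]; rewrite E; simpl;
    destruct (Q h), (R h); simpl; lia.
  - destruct (Q h), (R h); simpl; lia.
Qed.

Lemma length_filter_split {T} (a : T) (P fL fR : T -> bool) l : NoDup l ->
  (forall b, In b l -> b = a \/ fL b = true \/ fR b = true) ->
  length (filter P l) <= 1 + length (filter P (filter fL l)) + length (filter P (filter fR l)).
Proof.
  intros N H. rewrite !length_filter_filter.
  induction l as [|h l IH]; [simpl; lia|]. simpl.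
  inversion N as [|x0 l0 Hn N2]; subst.
  assert (Hl : forall b, In b l -> b = a \/ fL b = true \/ fR b = true) by (intros b Hb; apply H; simpl; auto).
  destruct (classic (h = a)) as [->|Hne].
  - assert (K : length (filter P l) <=
                length (filter (fun x => fL x && P x) l) + length (filter (fun x => fR x && P x) l)).
    { apply length_filter_cover. intros b Hb Pb.
      destruct (H b (or_intror Hb)) as [->|[E|E]]; [contradiction| |]; rewrite E, Pb; auto. }
    destruct (fL a), (fR a), (P a); simpl; lia.
  - specialize (IH N2 Hl).
    destruct (H h (or_introl eq_refl)) as [E|[E|E]]; [contradiction| |];
    rewrite E; destruct (fL h), (fR h), (P h); simpl; lia.
Qed.

Lemma length_le1 {T} (l : list T) : NoDup l -> (forall b c, In b l -> In c l -> b = c) -> length l <= 1.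
Proof.
  destruct l as [|a [|b l]]; simpl; intros N H; try lia.
  inversion N as [|x0 l0 Hn N2]; subst. exfalso. apply Hn. left. apply H; simpl; auto.
Qed.

(* [btw a b c]: going around the circle from [a], one meets [b] strictly before [c]. *)
Definition btw (a b c : nat) : Prop := (a < b /\ b < c) \/ (b < c /\ c < a) \/ (c < a /\ a < b).
Definition btwb (a b c : nat) : bool :=
  ((a <? b) && (b <? c)) || ((b <? c) && (c <? a)) || ((c <? a) && (a <? b)).

Lemma btwb_iff a b c : btwb a b c = true <-> btw a b c.
Proof. unfold btwb, btw. rewrite !orb_true_iff, !andb_true_iff, !Nat.ltb_lt. tauto. Qed.
Lemma btwb_false a b c : btwb a b c = false <-> ~ btw a b c.
Proof. rewrite <- btwb_iff. destruct (btwb a b c); split; congruence. Qed.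

Ltac btw_lia := unfold btw in *; lia.

Definition cnt (V : list nat) a c := length (filter (fun v => btwb a v c) V).

Lemma cnt_pos V a c v : In v V -> btw a v c -> 1 <= cnt V a c.
Proof. intros. unfold cnt. apply (length_filter_pos _ _ v); auto. apply btwb_iff; auto. Qed.

Lemma cnt_pos_inv V a c : 1 <= cnt V a c -> exists v, In v V /\ btw a v c.
Proof.
  intros H. destruct (length_filter_pos_inv _ _ H) as [v [Hv Hb]].
  exists v. split; auto. apply btwb_iff; auto.
Qed.

Lemma cnt_zero V a c v : cnt V a c = 0 -> In v V -> ~ btw a v c.
Proof. intros H Hv Hb. assert (1 <= cnt V a c) by (eapply cnt_pos; eauto). lia. Qed.

Lemma cnt_lt_l V a b w : In w V -> btw a w b -> cnt V a w < cnt V a b.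
Proof.
  intros Hw Hb. unfold cnt. apply length_filter_lt.
  - intros v _ Hv. apply btwb_iff. apply btwb_iff in Hv. btw_lia.
  - exists w. split; auto. split; [apply btwb_iff; auto|]. apply btwb_false. btw_lia.
Qed.

Lemma cnt_lt_r V a b w : In w V -> btw a w b -> cnt V w b < cnt V a b.
Proof.
  intros Hw Hb. unfold cnt. apply length_filter_lt.
  - intros v _ Hv. apply btwb_iff. apply btwb_iff in Hv. btw_lia.
  - exists w. split; auto. split; [apply btwb_iff; auto|]. apply btwb_false. btw_lia.
Qed.

Lemma first_on_arc V a b : 1 <= cnt V a b -> exists w, In w V /\ btw a w b /\ cnt V a w = 0.
Proof.
  remember (cnt V a b) as k eqn:Ek. revert b Ek.
  induction k as [k IH] using lt_wf_ind. intros b Ek Hk.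
  destruct (cnt_pos_inv V a b ltac:(lia)) as [w0 [Hw0 Hb0]].
  destruct (Nat.eq_dec (cnt V a w0) 0) as [E0|E0]; [exists w0; auto|].
  assert (Hlt := cnt_lt_l V a b w0 Hw0 Hb0).
  destruct (IH (cnt V a w0) ltac:(lia) w0 eq_refl ltac:(lia)) as [w [Hw [Hbw Hc]]].
  exists w. repeat split; auto. btw_lia.
Qed.

Lemma last_on_arc V a b : 1 <= cnt V a b -> exists w, In w V /\ btw a w b /\ cnt V w b = 0.
Proof.
  remember (cnt V a b) as k eqn:Ek. revert a Ek.
  induction k as [k IH] using lt_wf_ind. intros a Ek Hk.
  destruct (cnt_pos_inv V a b ltac:(lia)) as [w0 [Hw0 Hb0]].
  destruct (Nat.eq_dec (cnt V w0 b) 0) as [E0|E0]; [exists w0; auto|].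
  assert (Hlt := cnt_lt_r V a b w0 Hw0 Hb0).
  destruct (IH (cnt V w0 b) ltac:(lia) w0 eq_refl ltac:(lia)) as [w [Hw [Hbw Hc]]].
  exists w. repeat split; auto. btw_lia.
Qed.

Lemma next_uniq V u v w :
  In v V -> In w V -> v <> u -> w <> u -> cnt V u v = 0 -> cnt V u w = 0 -> v = w.
Proof.
  intros Hv Hw Hvu Hwu Cv Cw. destruct (Nat.eq_dec v w) as [|Hne]; auto. exfalso.
  assert (btw u v w \/ btw u w v) as [H|H] by btw_lia.
  - eapply cnt_zero; [exact Cw| exact Hv| exact H].
  - eapply cnt_zero; [exact Cv| exact Hw| exact H].
Qed.

Lemma prev_uniq V u v w :
  In v V -> In w V -> v <> u -> w <> u -> cnt V v u = 0 -> cnt V w u = 0 -> v = w.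
Proof.
  intros Hv Hw Hvu Hwu Cv Cw. destruct (Nat.eq_dec v w) as [|Hne]; auto. exfalso.
  assert (btw v w u \/ btw w v u) as [H|H] by btw_lia.
  - eapply cnt_zero; [exact Cv| exact Hw| exact H].
  - eapply cnt_zero; [exact Cw| exact Hv| exact H].
Qed.

Lemma next_in_arc V u v w p :
  In v V -> v <> u -> cnt V u v = 0 -> In w V -> btw u w p -> v <> p -> btw u v p.
Proof.
  intros Hv Hvu C Hw Hb Hvp. destruct (classic (btw u v p)) as [|Hn]; auto. exfalso.
  destruct (Nat.eq_dec w v) as [->|Hwv]; [contradiction|].
  apply (cnt_zero V u v w C Hw). btw_lia.
Qed.

(** * Abstract stars *)

(* An abstract arrow is a pair (source, exit) of positions on the circle. *)
Notation arr := (nat * nat)%type.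

Definition inter (p q : arr) : Prop :=
  snd p = snd q \/ (btw (fst p) (fst q) (snd p) /\ btw (snd p) (snd q) (fst p))
  \/ (btw (fst p) (snd q) (snd p) /\ btw (snd p) (fst q) (fst p)).

Lemma inter_sym p q : inter p q -> inter q p.
Proof. unfold inter, btw. intros [H|[H|H]]; [left; auto| |]; right; lia. Qed.

Definition longb (V : list nat) (p : arr) : bool :=
  (2 <=? cnt V (fst p) (snd p)) && (2 <=? cnt V (snd p) (fst p)).

Lemma longb_iff V p : longb V p = true <-> 2 <= cnt V (fst p) (snd p) /\ 2 <= cnt V (snd p) (fst p).
Proof. unfold longb. rewrite andb_true_iff, !Nat.leb_le. tauto. Qed.

(* The consequences of fan-crossing freeness used by the counting argument:
   vertex positions [V] and arrows [A], arrows start at vertices and exit at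
   distinct non-vertex positions, exits are equal or spread apart (room for a
   new vertex next to an exit), two arrows from one vertex exit through
   different edges, no arrow crosses an arrow starting at an endpoint of its
   exit edge, and no arrow crosses two arrows from a common vertex. *)
Record Star (V : list nat) (A : list arr) : Prop := {
  star_V_nodup : NoDup V;
  star_A_nodup : NoDup A;
  star_arrow_wf : forall b, In b A -> In (fst b) V /\ 1 <= snd b /\ ~ In (snd b) V;
  star_exit_sep : forall b c, In b A -> In c A ->
    snd b = snd c \/ snd b + 2 < snd c \/ snd c + 2 < snd b;
  star_fan_sep : forall b c, In b A -> In c A -> b <> c -> fst b = fst c ->
    1 <= cnt V (snd b) (snd c);
  star_cross_sep : forall b c, In b A -> In c A -> b <> c -> inter b c ->
    1 <= cnt V (snd b) (fst c) /\ 1 <= cnt V (fst c) (snd b);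
  star_fan_free : forall b c d, In b A -> In c A -> In d A -> b <> c -> b <> d -> c <> d ->
    fst c = fst d -> inter b c -> inter b d -> False }.

Lemma notin_neq (V : list nat) v p : In v V -> ~ In p V -> v <> p.
Proof. intros H1 H2 E. subst. contradiction. Qed.

(** * A good long arrow *)

(* A long arrow is good when no long arrow from the vertex following its source
   crosses it.  If no long arrow were good, then walking along the vertices on
   one side of a long arrow [(s, x)] would produce, from each of them, a long
   arrow exiting on the far side of [x]; the last of these crosses [(s, x)] from
   the vertex preceding [x], contradicting [star_cross_sep]. *)
Section GoodArrow.
Variables (V : list nat) (A : list arr).
Hypothesis HS : Star V A.
Hypothesis no_good : forall a, In a A -> longb V a = true ->
  exists c, In c A /\ longb V c = true /\ fst c <> fst a /\ cnt V (fst a) (fst c) = 0 /\ inter a c.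

Variables (s x : nat).
Hypothesis Hsx : In (s, x) A.
Hypothesis Lsx : 2 <= cnt V s x /\ 2 <= cnt V x s.

Definition long_beyond (v : nat) (c : arr) : Prop :=
  In c A /\ longb V c = true /\ fst c = v /\ (snd c = x \/ btw x (snd c) s).

(* The vertex following [s] starts such an arrow: the one crossing [(s, x)]. *)
Lemma beyond_first v : In v V -> btw s v x -> cnt V s v = 0 -> exists c, long_beyond v c.
Proof.
  destruct HS as [NV NA HA HSp HE HAx HB].
  destruct (HA _ Hsx) as [Hs [_ Hx]]. simpl in Hs, Hx. intros Hv Hsv C.
  destruct (no_good (s,x) Hsx (proj2 (longb_iff V (s,x)) Lsx)) as [c [Hc [Lc [Hne [C0 Hi]]]]].
  simpl in *. destruct (HA _ Hc) as [Hcs [_ Hcx]].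
  assert (fst c = v) by (eapply next_uniq; eauto; intro; subst; clear - Hsv; btw_lia).
  exists c. repeat split; auto. subst v.
  destruct Hi as [Hi|[Hi|Hi]]; simpl in Hi; [left; auto|right; tauto|].
  exfalso. clear - Hsv Hi. btw_lia.
Qed.

Lemma beyond_next v : In v V -> btw s v x -> 1 <= cnt V s v ->
  (forall w, In w V -> btw s w v -> exists d, long_beyond w d) -> exists c, long_beyond v c.
Proof.
  destruct HS as [NV NA HA HSp HE HAx HB]. intros Hv Hsv Hk IH.
  destruct (HA _ Hsx) as [Hs [_ Hx]]. simpl in Hs, Hx.
  destruct (last_on_arc V s v Hk) as [u [Hu [Hsu Cuv]]].
  assert (Husx : btw s u x) by (clear - Hsu Hsv; btw_lia).
  destruct (IH u Hu Hsu) as [b [Hb [Lb [Fb Sb]]]].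
  destruct (no_good b Hb Lb) as [c [Hc [Lc [Hne [C0 Hi]]]]].
  destruct (HA _ Hb) as [Hbs [_ Hbx]]. destruct (HA _ Hc) as [Hcs [_ Hcx]].
  assert (Hvu : v <> u) by (clear - Hsu; btw_lia).
  assert (Fc : fst c = v) by (rewrite Fb in *; eapply next_uniq; eauto).
  apply longb_iff in Lb. destruct Lb as [Lb1 Lb2].
  destruct (cnt_pos_inv V (fst b) (snd b) ltac:(lia)) as [w1 [Hw1 Bw1]].
  assert (Hvb : btw u v (snd b)).
  { rewrite Fb in Bw1. eapply next_in_arc; eauto. eapply notin_neq; eauto. }
  assert (Hcloc : snd c = snd b \/ btw (snd b) (snd c) u).
  { destruct Hi as [Hi|[Hi|Hi]]; [left; auto| |]; rewrite Fb, Fc in Hi; right;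
      [tauto|exfalso; clear - Hvb Hi; btw_lia]. }
  exists c. repeat split; auto.
  destruct (classic (snd c = x \/ btw x (snd c) s)) as [Hok|Hno]; auto. exfalso.
  (* otherwise [c] exits between [s] and [u]; the first vertex [w] after its exit
     starts an arrow [d] exiting beyond [x], which crosses [c] from an endpoint
     of [c]'s exit edge *)
  assert (Hsc : btw s (snd c) u).
  { assert (Hcs' : snd c <> s) by (apply not_eq_sym; eapply notin_neq; eauto).
    clear - Hno Hcloc Sb Husx Hcs'. btw_lia. }
  apply longb_iff in Lc. destruct Lc as [Lc1 Lc2].
  destruct (first_on_arc V (snd c) (fst c) ltac:(lia)) as [w [Hw [Bw Cw]]].
  rewrite Fc in Bw.
  assert (Hsw : btw s w v) by (clear - Bw Hsc Hsu; btw_lia).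
  destruct (IH w Hw Hsw) as [d [Hd [Ld [Fd Sd]]]].
  assert (Hvw : v <> w) by (clear - Bw; btw_lia).
  assert (Hcd : c <> d) by (intro; subst; congruence).
  assert (Hicd : inter c d) by (right; right; rewrite Fc, Fd; split; [clear - Sd Hsv Hsc Hsu; btw_lia|auto]).
  destruct (HAx c d Hc Hd Hcd Hicd) as [Z1 _]. rewrite Fd in Z1. lia.
Qed.

Lemma long_arrows_beyond k : forall v, In v V -> btw s v x -> cnt V s v = k ->
  exists c, long_beyond v c.
Proof.
  induction k as [k IH] using lt_wf_ind. intros v Hv Hsv Ck.
  destruct (Nat.eq_dec k 0) as [K0|K0]; [apply beyond_first; auto; lia|].
  apply beyond_next; auto; [lia|]. intros w Hw Hsw.
  apply (IH (cnt V s w)); auto; [subst k; apply cnt_lt_l; auto|clear - Hsw Hsv; btw_lia].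
Qed.

Lemma no_good_absurd : False.
Proof.
  destruct HS as [NV NA HA HSp HE HAx HB].
  destruct (HA _ Hsx) as [Hs [_ Hx]]. simpl in Hs, Hx.
  destruct (last_on_arc V s x ltac:(lia)) as [u [Hu [Hsu Cux]]].
  destruct (long_arrows_beyond _ u Hu Hsu eq_refl) as [c [Hc [Lc [Fc Sc]]]].
  assert (Hne : (s,x) <> c) by (intro Heq; rewrite <- Heq in Fc; simpl in Fc; subst u; clear - Hsu; btw_lia).
  assert (Hi : inter (s,x) c).
  { destruct Sc as [Sc|Sc]; [left; simpl; auto|right; left; simpl; rewrite Fc; auto]. }
  destruct (HAx _ _ Hsx Hc Hne Hi) as [_ Z]. simpl in Z. rewrite Fc in Z. lia.
Qed.
End GoodArrow.

Lemma good_exists V A : Star V A -> (exists b, In b A /\ longb V b = true) ->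
  exists a, In a A /\ longb V a = true /\
   forall c, In c A -> longb V c = true -> fst c <> fst a -> cnt V (fst a) (fst c) = 0 -> ~ inter a c.
Proof.
  intros HS [[s x] [Ha La]]. apply NNPP. intros Hn.
  apply (no_good_absurd V A HS) with s x; auto.
  - intros a Ha' La'. apply NNPP. intros Hn2. apply Hn. exists a. repeat split; auto.
    intros c Hc Lc Hne C0 Hi. apply Hn2. exists c. auto.
  - apply longb_iff in La. exact La.
Qed.

(** * Cutting an abstract star along a good long arrow *)

Lemma cnt_restrict W (J : nat -> bool) e p q :
  cnt (e :: filter J W) p q = (if btwb p e q then 1 else 0) + length (filter (fun v => J v && btwb p v q) W).
Proof. unfold cnt. cbn [filter]. destruct (btwb p e q); cbn [length]; rewrite length_filter_filter; lia. Qed.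

Lemma cnt_restrict_mono W (J : nat -> bool) e p q p' q' :
  (forall v, In v W -> btw p' v q' -> J v = true /\ btw p v q) -> cnt W p' q' <= cnt (e :: filter J W) p q.
Proof.
  intros H. rewrite cnt_restrict. unfold cnt.
  assert (length (filter (fun v => btwb p' v q') W) <= length (filter (fun v => J v && btwb p v q) W)).
  { apply length_filter_mono. intros v Hv Hb. apply btwb_iff in Hb. destruct (H v Hv Hb) as [H1 H2].
    rewrite H1. apply btwb_iff; auto. }
  lia.
Qed.

Lemma cnt_restrict_pos W (J : nat -> bool) e p q w :
  In w W -> J w = true -> btw p w q -> 1 <= cnt (e :: filter J W) p q.
Proof.
  intros Hw Jw Hb. rewrite cnt_restrict.
  assert (1 <= length (filter (fun v => J v && btwb p v q) W)).
  { apply (length_filter_pos _ _ w Hw). rewrite Jw. apply btwb_iff; auto. }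
  lia.
Qed.

Lemma cnt_restrict_new W (J : nat -> bool) e p q : btw p e q -> 1 <= cnt (e :: filter J W) p q.
Proof. intros Hb. rewrite cnt_restrict. apply btwb_iff in Hb. rewrite Hb. lia. Qed.

Lemma cnt_restrict_two_new W (J : nat -> bool) e p q w :
  In w W -> J w = true -> btw p w q -> btw p e q -> 2 <= cnt (e :: filter J W) p q.
Proof.
  intros Hw Jw Hb He. rewrite cnt_restrict.
  assert (1 <= length (filter (fun v => J v && btwb p v q) W)).
  { apply (length_filter_pos _ _ w Hw). rewrite Jw. apply btwb_iff; auto. }
  apply btwb_iff in He. rewrite He. lia.
Qed.

Lemma cnt_restrict_two W (J : nat -> bool) e p q w1 w2 :
  In w1 W -> In w2 W -> w1 <> w2 -> J w1 = true -> J w2 = true -> btw p w1 q -> btw p w2 q ->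
  2 <= cnt (e :: filter J W) p q.
Proof.
  intros H1 H2 Hne J1 J2 B1 B2. rewrite cnt_restrict.
  assert (2 <= length (filter (fun v => J v && btwb p v q) W)).
  { apply (length_filter_two _ _ w1 w2); auto; [rewrite J1|rewrite J2]; apply btwb_iff; auto. }
  lia.
Qed.

Lemma pair_neq_snd (b c : arr) : snd b <> snd c -> b <> c.
Proof. intros H E; subst; auto. Qed.
Lemma pair_neq_fst (b c : arr) : fst b <> fst c -> b <> c.
Proof. intros H E; subst; auto. Qed.
Lemma pair_snd_neq (b c : arr) : b <> c -> fst b = fst c -> snd b <> snd c.
Proof. intros H F E. apply H. destruct b, c; simpl in *; subst; auto. Qed.

(* A vertex witnessing the
   separation of two exits (or of an exit and a source) on one side of the cut
   survives in the smaller star: it is the new vertex [x+1] (resp. [x-1]) next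
   to the exit [x], a kept old vertex, or the source [0] of the cut. *)
Lemma fan_sep_left_arith x xb xc v1 sig :
 (btw 0 sig x \/ (sig = 0 /\ btw 0 xb x)) ->
 (btw 0 sig x \/ (sig = 0 /\ btw 0 xc x)) ->
 ~ ((xb = x \/ btw x xb 0) /\ (xc = x \/ btw x xc 0)) ->
 btw xb v1 xc -> 1 <= xb -> 1 <= xc -> 1 <= x ->
 (xb = x \/ xb + 2 < x \/ x + 2 < xb) -> (xc = x \/ xc + 2 < x \/ x + 2 < xc) -> v1 <> x ->
 xb <> xc ->
 btw xb (x+1) xc \/ (v1 = 0 \/ btw 0 v1 x) \/ btw xb 0 xc.
Proof. unfold btw; lia. Qed.

Lemma cross_sep_left_arith1 x xb sb sc w1 :
 (btw 0 sb x \/ (sb = 0 /\ btw 0 xb x)) -> (btw 0 sc x \/ sc = 0) ->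
 ~ (sc = 0 /\ btw x xb 0) -> btw xb w1 sc -> 1 <= xb -> 1 <= x ->
 (xb = x \/ xb + 2 < x \/ x + 2 < xb) -> w1 <> x -> sc <> x -> xb <> sc ->
 btw xb (x+1) sc \/ (w1 = 0 \/ btw 0 w1 x) \/ btw xb 0 sc.
Proof. unfold btw; lia. Qed.

Lemma cross_sep_left_arith2 x xb sb sc w2 :
 (btw 0 sb x \/ (sb = 0 /\ btw 0 xb x)) -> (btw 0 sc x \/ sc = 0) ->
 ~ (sc = 0 /\ btw x xb 0) -> btw sc w2 xb -> 1 <= xb -> 1 <= x ->
 (xb = x \/ xb + 2 < x \/ x + 2 < xb) -> w2 <> x -> sc <> x -> xb <> sc ->
 btw sc (x+1) xb \/ (w2 = 0 \/ btw 0 w2 x) \/ btw sc 0 xb.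
Proof. unfold btw; lia. Qed.

Lemma fan_sep_right_arith x xb xc v1 sig :
 (btw x sig 0 \/ (sig = 0 /\ btw x xb 0)) ->
 (btw x sig 0 \/ (sig = 0 /\ btw x xc 0)) ->
 ~ ((xb = x \/ btw 0 xb x) /\ (xc = x \/ btw 0 xc x)) ->
 btw xb v1 xc -> 1 <= xb -> 1 <= xc -> 2 <= x ->
 (xb = x \/ xb + 2 < x \/ x + 2 < xb) -> (xc = x \/ xc + 2 < x \/ x + 2 < xc) -> v1 <> x ->
 xb <> xc ->
 btw xb (x-1) xc \/ (v1 = 0 \/ btw x v1 0) \/ btw xb 0 xc.
Proof. unfold btw; lia. Qed.

Lemma cross_sep_right_arith1 x xb sb sc w1 :
 (btw x sb 0 \/ (sb = 0 /\ btw x xb 0)) -> (btw x sc 0 \/ sc = 0) ->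
 ~ (sc = 0 /\ btw 0 xb x) -> btw xb w1 sc -> 1 <= xb -> 2 <= x ->
 (xb = x \/ xb + 2 < x \/ x + 2 < xb) -> w1 <> x -> sc <> x -> xb <> sc ->
 btw xb (x-1) sc \/ (w1 = 0 \/ btw x w1 0) \/ btw xb 0 sc.
Proof. unfold btw; lia. Qed.

Lemma cross_sep_right_arith2 x xb sb sc w2 :
 (btw x sb 0 \/ (sb = 0 /\ btw x xb 0)) -> (btw x sc 0 \/ sc = 0) ->
 ~ (sc = 0 /\ btw 0 xb x) -> btw sc w2 xb -> 1 <= xb -> 2 <= x ->
 (xb = x \/ xb + 2 < x \/ x + 2 < xb) -> w2 <> x -> sc <> x -> xb <> sc ->
 btw sc (x-1) xb \/ (w2 = 0 \/ btw x w2 0) \/ btw sc 0 xb.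
Proof. unfold btw; lia. Qed.
(* Where an arrow of the left (resp. right) side of the cut can exit: the five
   cases of the proof that long arrows stay long after the cut. *)
Lemma left_arrow_cases (sg xi z : nat) : (btw 0 sg z \/ (sg = 0 /\ btw 0 xi z)) -> xi <> sg -> xi <> 0 ->
  (xi = z \/ xi + 2 < z \/ z + 2 < xi) -> sg <> z ->
  (sg = 0 /\ btw 0 xi z) \/ (btw 0 sg z /\ btw sg xi z) \/ (btw 0 sg z /\ btw 0 xi sg) \/
  (btw 0 sg z /\ xi = z) \/ (btw 0 sg z /\ btw z xi 0).
Proof. intros H. destruct H as [H|[-> H]]; [|left; auto].
 assert (H' : 0 < sg /\ sg < z) by (unfold btw in H; lia). intros.
 destruct (Nat.lt_total xi sg) as [Q|[Q|Q]]; [|congruence|].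
 - right; right; left. split; auto. unfold btw; lia.
 - destruct (Nat.lt_total xi z) as [Q2|[Q2|Q2]].
   + right; left. split; auto. unfold btw; lia.
   + right; right; right; left. auto.
   + right; right; right; right. split; auto. unfold btw; lia.
Qed.

Lemma right_arrow_cases (sg xi z : nat) : (btw z sg 0 \/ (sg = 0 /\ btw z xi 0)) -> xi <> sg -> xi <> 0 ->
  (xi = z \/ xi + 2 < z \/ z + 2 < xi) -> sg <> z ->
  (sg = 0 /\ btw z xi 0) \/ (btw z sg 0 /\ btw sg xi 0) \/ (btw z sg 0 /\ btw z xi sg) \/
  (btw z sg 0 /\ xi = z) \/ (btw z sg 0 /\ btw 0 xi z).
Proof. intros H. destruct H as [H|[-> H]]; [|left; auto].
 assert (H' : 0 < z /\ z < sg) by (unfold btw in H; lia). intros.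
 destruct (Nat.lt_total xi sg) as [Q|[Q|Q]]; [|congruence|].
 - destruct (Nat.lt_total xi z) as [Q2|[Q2|Q2]].
   + right; right; right; right. split; auto. unfold btw; lia.
   + right; right; right; left. auto.
   + right; right; left. split; auto. unfold btw; lia.
 - right; left. split; auto. unfold btw; lia.
Qed.


(* After a rotation, the good long arrow is [(0, x)].  The left star
   keeps the vertices from [0] to [x] and the arrows starting there (from [0]
   only those exiting before [x]), and gets the new vertex [x+1] at the exit
   point; the right star is the mirror image with new vertex [x-1]. *)
Section Split.
Variables (V : list nat) (A : list arr) (x : nat).
Hypothesis HS : Star V A.
Hypothesis Ha : In (0,x) A.
Hypothesis La : 2 <= cnt V 0 x /\ 2 <= cnt V x 0.
Hypothesis Hgood : forall c, In c A -> longb V c = true -> fst c <> 0 -> cnt V 0 (fst c) = 0 ->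
  ~ inter (0,x) c.

Definition JL (v : nat) : bool := (v =? 0) || btwb 0 v x.
Definition VL := (x+1) :: filter JL V.
Definition inL (b : arr) : bool := btwb 0 (fst b) x || ((fst b =? 0) && btwb 0 (snd b) x).
Definition AL := filter inL A.
Definition JR (v : nat) : bool := (v =? 0) || btwb x v 0.
Definition VR := (x-1) :: filter JR V.
Definition inR (b : arr) : bool := btwb x (fst b) 0 || ((fst b =? 0) && btwb x (snd b) 0).
Definition AR := filter inR A.
(* Right arrows that may stop being long: those from the vertex preceding [0]
   that exit on the left side. *)
Definition lost (b : arr) : bool := (cnt V (fst b) 0 =? 0) && btwb x (fst b) 0 && btwb 0 (snd b) x.

Lemma JL_iff v : JL v = true <-> v = 0 \/ btw 0 v x.
Proof. unfold JL. rewrite orb_true_iff, Nat.eqb_eq, btwb_iff. tauto. Qed.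
Lemma JR_iff v : JR v = true <-> v = 0 \/ btw x v 0.
Proof. unfold JR. rewrite orb_true_iff, Nat.eqb_eq, btwb_iff. tauto. Qed.
Lemma lost_iff b : lost b = true <-> cnt V (fst b) 0 = 0 /\ btw x (fst b) 0 /\ btw 0 (snd b) x.
Proof. unfold lost. rewrite !andb_true_iff, Nat.eqb_eq, !btwb_iff. tauto. Qed.

Lemma AL_sub b : In b AL -> In b A /\ (btw 0 (fst b) x \/ (fst b = 0 /\ btw 0 (snd b) x)).
Proof. unfold AL, inL. rewrite filter_In, orb_true_iff, andb_true_iff, Nat.eqb_eq, !btwb_iff. tauto. Qed.
Lemma AR_sub b : In b AR -> In b A /\ (btw x (fst b) 0 \/ (fst b = 0 /\ btw x (snd b) 0)).
Proof. unfold AR, inR. rewrite filter_In, orb_true_iff, andb_true_iff, Nat.eqb_eq, !btwb_iff. tauto. Qed.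

Lemma split_basic : In 0 V /\ 2 <= x /\ ~ In x V.
Proof.
  destruct HS as [NV NA HA _ _ _ _]. destruct (HA _ Ha) as [Hs [Hx Hn]]. simpl in *.
  destruct (cnt_pos_inv V 0 x ltac:(lia)) as [w1 [_ B1]].
  repeat split; auto. btw_lia.
Qed.

Lemma cnt_VL_pos p q w : In w V -> btw p w q ->
  btw p (x+1) q \/ (w = 0 \/ btw 0 w x) \/ btw p 0 q -> 1 <= cnt VL p q.
Proof.
  intros Hw Bw [G|[G|G]].
  - apply cnt_restrict_new; auto.
  - apply (cnt_restrict_pos _ _ _ _ _ w); auto. apply JL_iff; auto.
  - apply (cnt_restrict_pos _ _ _ _ _ 0); [apply split_basic|apply JL_iff; auto|exact G].
Qed.

Lemma cnt_VR_pos p q w : In w V -> btw p w q ->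
  btw p (x-1) q \/ (w = 0 \/ btw x w 0) \/ btw p 0 q -> 1 <= cnt VR p q.
Proof.
  intros Hw Bw [G|[G|G]].
  - apply cnt_restrict_new; auto.
  - apply (cnt_restrict_pos _ _ _ _ _ w); auto. apply JR_iff; auto.
  - apply (cnt_restrict_pos _ _ _ _ _ 0); [apply split_basic|apply JR_iff; auto|exact G].
Qed.

Lemma cnt_VL_mono p q : (forall v, btw p v q -> btw 0 v x) -> cnt V p q <= cnt VL p q.
Proof. intros H. apply cnt_restrict_mono. intros v _ Hv. split; auto. apply JL_iff. auto. Qed.

Lemma cnt_VR_mono p q : (forall v, btw p v q -> btw x v 0) -> cnt V p q <= cnt VR p q.
Proof. intros H. apply cnt_restrict_mono. intros v _ Hv. split; auto. apply JR_iff. auto. Qed.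

Lemma side_arrow_facts b : In b A ->
  In (fst b) V /\ 1 <= snd b /\ ~ In (snd b) V /\
  (snd b = x \/ snd b + 2 < x \/ x + 2 < snd b) /\ fst b <> x /\ snd b <> fst b.
Proof.
  intros Hb. destruct split_basic as (_ & _ & HxV).
  destruct HS as [_ _ HA HSp _ _ _]. destruct (HA _ Hb) as (H1 & H2 & H3).
  assert (Sb := HSp _ _ Hb Ha). simpl in Sb.
  repeat split; auto.
  - intro E. apply HxV. rewrite <- E. exact H1.
  - intro E. apply H3. rewrite E. exact H1.
Qed.

Lemma AL_fan_sep b c : In b AL -> In c AL -> b <> c -> fst b = fst c -> 1 <= cnt VL (snd b) (snd c).
Proof.
  destruct HS as [NV NA HA HSp HE HAx HB].
  intros Hb Hc Hne Hf. apply AL_sub in Hb as [Hb Lb]. apply AL_sub in Hc as [Hc Lc].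
  destruct (cnt_pos_inv V _ _ (HE b c Hb Hc Hne Hf)) as [v1 [Hv1 B1]].
  (* (0, x) would cross two arrows from one vertex *)
  assert (Hnot : ~ ((snd b = x \/ btw x (snd b) 0) /\ (snd c = x \/ btw x (snd c) 0))).
  { intros [Eb Ec].
    assert (Hsb : btw 0 (fst b) x).
    { destruct Lb as [?|[_ Q]]; auto. exfalso. clear - Q Eb. btw_lia. }
    assert (Hab : inter (0,x) b) by (destruct Eb; [left|right; left]; simpl; auto).
    assert (Hac : inter (0,x) c) by (rewrite Hf in Hsb; destruct Ec; [left|right; left]; simpl; auto).
    apply (HB (0,x) b c Ha Hb Hc); auto; apply pair_neq_fst; simpl; [|rewrite <- Hf];
      clear - Hsb; btw_lia. }
  destruct (side_arrow_facts b Hb) as (_ & Xb1 & _ & Sb & _). destruct (side_arrow_facts c Hc) as (_ & Xc1 & _ & Sc & _).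
  assert (Hv1x : v1 <> x) by (intro; subst; apply split_basic; auto).
  rewrite Hf in Lb.
  apply (cnt_VL_pos _ _ v1 Hv1 B1).
  assert (Hx2 : 2 <= x) by apply split_basic.
  apply (fan_sep_left_arith x (snd b) (snd c) v1 (fst c)); auto; [lia|apply pair_snd_neq; auto].
Qed.

Lemma AL_cross_sep b c : In b AL -> In c AL -> b <> c -> inter b c ->
  1 <= cnt VL (snd b) (fst c) /\ 1 <= cnt VL (fst c) (snd b).
Proof.
  destruct HS as [NV NA HA HSp HE HAx HB].
  intros Hb Hc Hne Hi. apply AL_sub in Hb as [Hb Lb]. apply AL_sub in Hc as [Hc Lc].
  destruct (HAx b c Hb Hc Hne Hi) as [C1 C2].
  (* b would be crossed by both (0, x) and c *)
  assert (Hnot : ~ (fst c = 0 /\ btw x (snd b) 0)).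
  { intros [Fc Eb].
    assert (Hsb : btw 0 (fst b) x).
    { destruct Lb as [?|[_ Q]]; auto. exfalso. clear - Q Eb. btw_lia. }
    assert (Hab : inter (0,x) b) by (right; left; simpl; auto).
    assert (Hac : (0,x) <> c).
    { intro E. destruct Lc as [Q|[_ Q]]; [rewrite Fc in Q|rewrite <- E in Q; simpl in Q]; clear - Q; btw_lia. }
    apply (HB b (0,x) c Hb Ha Hc); auto.
    - apply pair_neq_fst; simpl. clear - Hsb; btw_lia.
    - apply inter_sym; auto. }
  destruct (side_arrow_facts b Hb) as (_ & Xb1 & Xb2 & Sb & _ & _).
  destruct (side_arrow_facts c Hc) as (Hcv & _ & _ & _ & Hcx & _).
  assert (Lc' : btw 0 (fst c) x \/ fst c = 0) by tauto.
  assert (Hbc : snd b <> fst c) by (intro E; apply Xb2; rewrite E; auto).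
  destruct (cnt_pos_inv V _ _ C1) as [w1 [Hw1 B1]]. destruct (cnt_pos_inv V _ _ C2) as [w2 [Hw2 B2]].
  assert (Hw1x : w1 <> x) by (intro; subst; apply split_basic; auto).
  assert (Hw2x : w2 <> x) by (intro; subst; apply split_basic; auto).
  assert (Hx2 : 2 <= x) by apply split_basic.
  split.
  - apply (cnt_VL_pos _ _ w1 Hw1 B1).
    apply (cross_sep_left_arith1 x (snd b) (fst b) (fst c) w1); auto; lia.
  - apply (cnt_VL_pos _ _ w2 Hw2 B2).
    apply (cross_sep_left_arith2 x (snd b) (fst b) (fst c) w2); auto; lia.
Qed.

Lemma Star_L : Star VL AL.
Proof.
  destruct split_basic as (Hs & Hx2 & HxV).
  destruct HS as [NV NA HA HSp HE HAx HB].
  constructor.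
  - unfold VL. constructor; [|apply NoDup_filter; auto].
    rewrite filter_In, JL_iff. intros [_ [H|H]]; [lia|]. clear - H. btw_lia.
  - apply NoDup_filter; auto.
  - intros b Hb. apply AL_sub in Hb as [Hb Hl]. destruct (HA _ Hb) as (H1 & H2 & H3).
    split; [|split; auto].
    + right. apply filter_In. split; auto. apply JL_iff. tauto.
    + intros [E|E].
      * destruct (HSp _ _ Ha Hb) as [Q|[Q|Q]]; simpl in *; lia.
      * apply filter_In in E as [E _]. contradiction.
  - intros b c Hb Hc. apply AL_sub in Hb as [Hb _]. apply AL_sub in Hc as [Hc _]. auto.
  - exact AL_fan_sep.
  - exact AL_cross_sep.
  - intros b c d Hb Hc Hd. apply AL_sub in Hb as [Hb _]. apply AL_sub in Hc as [Hc _].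
    apply AL_sub in Hd as [Hd _]. eapply HB; eauto.
Qed.

Lemma AR_fan_sep b c : In b AR -> In c AR -> b <> c -> fst b = fst c -> 1 <= cnt VR (snd b) (snd c).
Proof.
  destruct HS as [NV NA HA HSp HE HAx HB].
  intros Hb Hc Hne Hf. apply AR_sub in Hb as [Hb Lb]. apply AR_sub in Hc as [Hc Lc].
  destruct (cnt_pos_inv V _ _ (HE b c Hb Hc Hne Hf)) as [v1 [Hv1 B1]].
  assert (Hnot : ~ ((snd b = x \/ btw 0 (snd b) x) /\ (snd c = x \/ btw 0 (snd c) x))).
  { intros [Eb Ec].
    assert (Hsb : btw x (fst b) 0).
    { destruct Lb as [?|[_ Q]]; auto. exfalso. clear - Q Eb. btw_lia. }
    assert (Hab : inter (0,x) b) by (destruct Eb; [left|right; right]; simpl; auto).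
    assert (Hac : inter (0,x) c) by (rewrite Hf in Hsb; destruct Ec; [left|right; right]; simpl; auto).
    apply (HB (0,x) b c Ha Hb Hc); auto; apply pair_neq_fst; simpl; [|rewrite <- Hf];
      clear - Hsb; btw_lia. }
  destruct (side_arrow_facts b Hb) as (_ & Xb1 & _ & Sb & _). destruct (side_arrow_facts c Hc) as (_ & Xc1 & _ & Sc & _).
  assert (Hv1x : v1 <> x) by (intro; subst; apply split_basic; auto).
  rewrite Hf in Lb.
  apply (cnt_VR_pos _ _ v1 Hv1 B1).
  assert (Hx2 : 2 <= x) by apply split_basic.
  apply (fan_sep_right_arith x (snd b) (snd c) v1 (fst c)); auto. apply pair_snd_neq; auto.
Qed.

Lemma AR_cross_sep b c : In b AR -> In c AR -> b <> c -> inter b c ->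
  1 <= cnt VR (snd b) (fst c) /\ 1 <= cnt VR (fst c) (snd b).
Proof.
  destruct HS as [NV NA HA HSp HE HAx HB].
  intros Hb Hc Hne Hi. apply AR_sub in Hb as [Hb Lb]. apply AR_sub in Hc as [Hc Lc].
  destruct (HAx b c Hb Hc Hne Hi) as [C1 C2].
  assert (Hnot : ~ (fst c = 0 /\ btw 0 (snd b) x)).
  { intros [Fc Eb].
    assert (Hsb : btw x (fst b) 0).
    { destruct Lb as [?|[_ Q]]; auto. exfalso. clear - Q Eb. btw_lia. }
    assert (Hab : inter (0,x) b) by (right; right; simpl; auto).
    assert (Hac : (0,x) <> c).
    { intro E. destruct Lc as [Q|[_ Q]]; [rewrite Fc in Q|rewrite <- E in Q; simpl in Q]; clear - Q; btw_lia. }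
    apply (HB b (0,x) c Hb Ha Hc); auto.
    - apply pair_neq_fst; simpl. clear - Hsb; btw_lia.
    - apply inter_sym; auto. }
  destruct (side_arrow_facts b Hb) as (_ & Xb1 & Xb2 & Sb & _ & _).
  destruct (side_arrow_facts c Hc) as (Hcv & _ & _ & _ & Hcx & _).
  assert (Lc' : btw x (fst c) 0 \/ fst c = 0) by tauto.
  assert (Hbc : snd b <> fst c) by (intro E; apply Xb2; rewrite E; auto).
  destruct (cnt_pos_inv V _ _ C1) as [w1 [Hw1 B1]]. destruct (cnt_pos_inv V _ _ C2) as [w2 [Hw2 B2]].
  assert (Hw1x : w1 <> x) by (intro; subst; apply split_basic; auto).
  assert (Hw2x : w2 <> x) by (intro; subst; apply split_basic; auto).
  assert (Hx2 : 2 <= x) by apply split_basic.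
  split.
  - apply (cnt_VR_pos _ _ w1 Hw1 B1).
    apply (cross_sep_right_arith1 x (snd b) (fst b) (fst c) w1); auto.
  - apply (cnt_VR_pos _ _ w2 Hw2 B2).
    apply (cross_sep_right_arith2 x (snd b) (fst b) (fst c) w2); auto.
Qed.

Lemma Star_R : Star VR AR.
Proof.
  destruct split_basic as (Hs & Hx2 & HxV).
  destruct HS as [NV NA HA HSp HE HAx HB].
  constructor.
  - unfold VR. constructor; [|apply NoDup_filter; auto].
    rewrite filter_In, JR_iff. intros [_ [H|H]]; [lia|]. clear - H Hx2. btw_lia.
  - apply NoDup_filter; auto.
  - intros b Hb. apply AR_sub in Hb as [Hb Hl]. destruct (HA _ Hb) as (H1 & H2 & H3).
    split; [|split; auto].
    + right. apply filter_In. split; auto. apply JR_iff. tauto.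
    + intros [E|E].
      * destruct (HSp _ _ Ha Hb) as [Q|[Q|Q]]; simpl in *; lia.
      * apply filter_In in E as [E _]. contradiction.
  - intros b c Hb Hc. apply AR_sub in Hb as [Hb _]. apply AR_sub in Hc as [Hc _]. auto.
  - exact AR_fan_sep.
  - exact AR_cross_sep.
  - intros b c d Hb Hc Hd. apply AR_sub in Hb as [Hb _]. apply AR_sub in Hc as [Hc _].
    apply AR_sub in Hd as [Hd _]. eapply HB; eauto.
Qed.

(* Long arrows of the left side stay long; for the one case where the arc from
   the exit back to the source loses vertices, goodness of (0, x) supplies a
   vertex between 0 and the source. *)
Lemma long_L b : In b AL -> longb V b = true -> longb VL b = true.
Proof.
  intros HbL Lb. destruct (AL_sub b HbL) as [Hb Sec].
  destruct split_basic as (Hs & Hx2 & HxV).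
  destruct HS as [NV NA HA HSp HE HAx HB].
  destruct (side_arrow_facts b Hb) as (Hsv & Hx1 & Hxn & Sp & Hsx & Hxs).
  assert (Lb' := Lb). apply longb_iff in Lb' as [L1 L2]. apply longb_iff.
  destruct b as [sg xi]. simpl in *.
  destruct (left_arrow_cases sg xi x Sec Hxs ltac:(lia) Sp Hsx)
    as [[C1 C2]|[[C1 C2]|[[C1 C2]|[[C1 C2]|[C1 C2]]]]]; clear Sec.
  - subst sg. split.
    + eapply Nat.le_trans; [exact L1|]. apply cnt_VL_mono. btw_lia.
    + assert (Hne : (0,xi) <> (0,x)) by (apply pair_neq_snd; simpl; btw_lia).
      destruct (cnt_pos_inv V _ _ (HE _ _ Hb Ha Hne eq_refl)) as [w [Hw Bw]]. simpl in Bw.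
      apply (cnt_restrict_two_new _ _ _ _ _ w); auto; [apply JL_iff; right| |]; btw_lia.
  - split.
    + eapply Nat.le_trans; [exact L1|]. apply cnt_VL_mono. btw_lia.
    + apply (cnt_restrict_two_new _ _ _ _ _ 0); auto; btw_lia.
  - split.
    + apply (cnt_restrict_two_new _ _ _ _ _ 0); auto; btw_lia.
    + eapply Nat.le_trans; [exact L2|]. apply cnt_VL_mono. btw_lia.
  - subst xi. split.
    + eapply Nat.le_trans; [exact L1|]. apply cnt_VL_mono. btw_lia.
    + apply (cnt_restrict_two_new _ _ _ _ _ 0); auto; btw_lia.
  -
    assert (Hi : inter (0,x) (sg,xi)) by (right; left; simpl; auto).
    assert (Hne : (0,x) <> (sg,xi)) by (apply pair_neq_fst; simpl; btw_lia).
    destruct (HAx _ _ Ha Hb Hne Hi) as [_ K2]. simpl in K2.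
    destruct (cnt_pos_inv V _ _ K2) as [w [Hw Bw]].
    split.
    + apply (cnt_restrict_two_new _ _ _ _ _ w); auto; [apply JL_iff; right| |]; btw_lia.
    + destruct (Nat.eq_dec (cnt V 0 sg) 0) as [E|E].
      { exfalso. apply (Hgood (sg,xi) Hb Lb); simpl; auto. btw_lia. }
      destruct (cnt_pos_inv V 0 sg ltac:(lia)) as [w' [Hw' Bw']].
      apply (cnt_restrict_two _ _ _ _ _ 0 w'); auto; try (apply JL_iff; right); btw_lia.
Qed.

Lemma long_R b : In b AR -> longb V b = true -> longb VR b = true \/ lost b = true.
Proof.
  intros HbR Lb. destruct (AR_sub b HbR) as [Hb Sec].
  destruct split_basic as (Hs & Hx2 & HxV).
  destruct HS as [NV NA HA HSp HE HAx HB].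
  destruct (side_arrow_facts b Hb) as (Hsv & Hx1 & Hxn & Sp & Hsx & Hxs).
  assert (Lb' := Lb). apply longb_iff in Lb' as [L1 L2]. rewrite longb_iff, lost_iff.
  destruct b as [sg xi]. simpl in *.
  destruct (right_arrow_cases sg xi x Sec Hxs ltac:(lia) Sp Hsx)
    as [[C1 C2]|[[C1 C2]|[[C1 C2]|[[C1 C2]|[C1 C2]]]]]; clear Sec.
  - subst sg. left. split.
    + assert (Hne : (0,x) <> (0,xi)) by (apply pair_neq_snd; simpl; btw_lia).
      destruct (cnt_pos_inv V _ _ (HE _ _ Ha Hb Hne eq_refl)) as [w [Hw Bw]]. simpl in Bw.
      apply (cnt_restrict_two_new _ _ _ _ _ w); auto; [apply JR_iff; right| |]; btw_lia.
    + eapply Nat.le_trans; [exact L2|]. apply cnt_VR_mono. btw_lia.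
  - left. split.
    + eapply Nat.le_trans; [exact L1|]. apply cnt_VR_mono. btw_lia.
    + apply (cnt_restrict_two_new _ _ _ _ _ 0); auto; btw_lia.
  - left. split.
    + apply (cnt_restrict_two_new _ _ _ _ _ 0); auto; btw_lia.
    + eapply Nat.le_trans; [exact L2|]. apply cnt_VR_mono. btw_lia.
  - subst xi. left. split.
    + apply (cnt_restrict_two_new _ _ _ _ _ 0); auto; btw_lia.
    + eapply Nat.le_trans; [exact L2|]. apply cnt_VR_mono. btw_lia.
  - (* b crosses (0, x); it is lost unless a vertex lies between its source and 0 *)
    assert (Hi : inter (0,x) (sg,xi)) by (right; right; simpl; auto).
    assert (Hne : (0,x) <> (sg,xi)) by (apply pair_neq_fst; simpl; btw_lia).
    destruct (HAx _ _ Ha Hb Hne Hi) as [K1 _]. simpl in K1.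
    destruct (cnt_pos_inv V _ _ K1) as [w [Hw Bw]].
    destruct (Nat.eq_dec (cnt V sg 0) 0) as [E|E]; [right; auto|left].
    destruct (cnt_pos_inv V sg 0 ltac:(lia)) as [w' [Hw' Bw']].
    split.
    + apply (cnt_restrict_two _ _ _ _ _ 0 w'); auto; try (apply JR_iff; right); btw_lia.
    + apply (cnt_restrict_two_new _ _ _ _ _ w); auto; [apply JR_iff; right| |]; btw_lia.
Qed.

(* At most one arrow is lost: two of them would start at the vertex preceding 0
   and both cross (0, x). *)
Lemma lost_le1 : length (filter lost AR) <= 1.
Proof.
  destruct split_basic as (Hs & Hx2 & HxV). destruct HS as [NV NA HA HSp HE HAx HB].
  apply length_le1.
  - apply NoDup_filter. apply NoDup_filter. auto.
  - intros b c Hb Hc. apply filter_In in Hb as [Hb Lb]. apply filter_In in Hc as [Hc Lc].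
    apply AR_sub in Hb as [Hb _]. apply AR_sub in Hc as [Hc _].
    apply lost_iff in Lb as (Cb & Rb & Xb). apply lost_iff in Lc as (Cc & Rc & Xc).
    destruct (classic (b = c)) as [|Hne]; auto. exfalso.
    assert (Hf : fst b = fst c) by (apply (prev_uniq V 0); try apply HA; auto; btw_lia).
    apply (HB (0,x) b c Ha Hb Hc); auto.
    + apply pair_neq_fst; simpl; btw_lia.
    + apply pair_neq_fst; simpl; btw_lia.
    + right; right; simpl; auto.
    + right; right; simpl; auto.
Qed.

Lemma split_cover b : In b A -> b = (0,x) \/ inL b = true \/ inR b = true.
Proof.
  intros Hb. destruct split_basic as (Hs & Hx2 & HxV).
  destruct (side_arrow_facts b Hb) as (Hsv & Hx1 & Hxn & _ & Hsx & Hxs).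
  unfold inL, inR. rewrite !orb_true_iff, !andb_true_iff, !Nat.eqb_eq, !btwb_iff.
  destruct (Nat.eq_dec (fst b) 0) as [E|E].
  - assert (snd b <> 0) by (intro Q; apply Hxn; rewrite Q; auto).
    destruct (Nat.eq_dec (snd b) x) as [Q|Q].
    + left. destruct b; simpl in *; subst; auto.
    + right. rewrite E. btw_lia.
  - right. btw_lia.
Qed.

(* Long arrows of the star: the cut arrow, the long arrows of both sides, and at
   most one lost arrow. *)
Lemma bound_split : length (filter (longb V) A) <=
  2 + length (filter (longb VL) AL) + length (filter (longb VR) AR).
Proof.
  destruct HS as [NV NA _ _ _ _ _].
  assert (P := length_filter_split (0,x) (longb V) inL inR A NA split_cover).
  fold AL AR in P.
  assert (K1 : length (filter (longb V) AL) <= length (filter (longb VL) AL)).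
  { apply length_filter_mono. intros b Hb Lb. apply long_L; auto. }
  assert (K2 : length (filter (longb V) AR) <= length (filter (longb VR) AR) + length (filter lost AR)).
  { apply length_filter_cover. intros b Hb Lb. apply long_R; auto. }
  assert (K3 := lost_le1). lia.
Qed.

(* The sizes: the two sides share the vertex 0 and each gets one new vertex. *)
Lemma split_sizes :
  length VL = 2 + cnt V 0 x /\ length VR = 2 + cnt V x 0 /\ length V = 1 + cnt V 0 x + cnt V x 0.
Proof.
  destruct split_basic as (Hs & Hx2 & HxV). destruct HS as [NV _ _ _ _ _ _].
  assert (Disj0 : forall p q, p = 0 \/ q = 0 ->
            length (filter (fun v => (v =? 0) || btwb p v q) V) = 1 + cnt V p q).
  { intros p q Hpq. rewrite length_filter_orb, length_filter_single; auto.
    intros v _ E1 E2. apply Nat.eqb_eq in E1. apply btwb_iff in E2. subst. btw_lia. }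
  split; [|split].
  - unfold VL, JL. simpl. rewrite Disj0; auto.
  - unfold VR, JR. simpl. rewrite Disj0; auto.
  - rewrite <- (length_filter_all (fun v => ((v =? 0) || btwb 0 v x) || btwb x v 0) V).
    + rewrite length_filter_orb, Disj0; [unfold cnt; lia|auto|].
      intros v _ E1 E2. apply orb_true_iff in E1. apply btwb_iff in E2.
      destruct E1 as [E1|E1]; [apply Nat.eqb_eq in E1|apply btwb_iff in E1]; subst; btw_lia.
    + intros v Hv. assert (v <> x) by (intro; subst; contradiction).
      rewrite !orb_true_iff, Nat.eqb_eq, !btwb_iff. btw_lia.
Qed.
End Split.

Definition rot (M s p : nat) : nat := if s <=? p then p - s else p + M - s.
Definition rotp (M s : nat) (b : arr) : arr := (rot M s (fst b), rot M s (snd b)).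

Lemma rot_inj M s p q : s < M -> p < M -> q < M -> rot M s p = rot M s q -> p = q.
Proof. unfold rot. destruct (Nat.leb_spec s p), (Nat.leb_spec s q); lia. Qed.

Lemma rot_s M s : rot M s s = 0.
Proof. unfold rot. rewrite Nat.leb_refl. lia. Qed.

Lemma rot_zero M s p : s < M -> p < M -> rot M s p = 0 -> p = s.
Proof. unfold rot. destruct (Nat.leb_spec s p); lia. Qed.

Lemma rot_btw M s a b c : s < M -> a < M -> b < M -> c < M ->
  (btw (rot M s a) (rot M s b) (rot M s c) <-> btw a b c).
Proof.
  intros. unfold rot. destruct (Nat.leb_spec s a), (Nat.leb_spec s b), (Nat.leb_spec s c); btw_lia.
Qed.

Lemma rot_cnt M s V a c : s < M -> a < M -> c < M -> (forall v, In v V -> v < M) ->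
  cnt (map (rot M s) V) (rot M s a) (rot M s c) = cnt V a c.
Proof.
  intros Hs Ha Hc HV. unfold cnt. rewrite filter_map_swap, length_map. f_equal.
  apply filter_ext_in. intros v Hv.
  specialize (HV v Hv). destruct (btwb a v c) eqn:E.
  - apply btwb_iff. apply rot_btw; auto. apply btwb_iff; auto.
  - apply btwb_false. rewrite rot_btw by auto. apply btwb_false; auto.
Qed.

Section Rot.
Variables (V : list nat) (A : list arr) (s : nat).
Hypothesis HS : Star V A.
Hypothesis Hs : In s V.

(* A circle size exceeding every position in use. *)
Definition Mx := 3 + list_max (V ++ map snd A).
Definition rV := map (rot Mx s) V.
Definition rA := map (rotp Mx s) A.

Lemma Mx_bound p : In p (V ++ map snd A) -> p + 3 <= Mx.
Proof.
  intros H. unfold Mx. assert (K := proj1 (list_max_le (V ++ map snd A) _) (Nat.le_refl _)).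
  rewrite Forall_forall in K. specialize (K p H). lia.
Qed.
Lemma Mx_V v : In v V -> v + 3 <= Mx.
Proof. intros H. apply Mx_bound, in_or_app; auto. Qed.
Lemma Mx_X b : In b A -> snd b + 3 <= Mx.
Proof. intros H. apply Mx_bound, in_or_app. right. apply in_map; auto. Qed.
Lemma Mx_F b : In b A -> fst b + 3 <= Mx.
Proof. intros H. apply Mx_V. apply (star_arrow_wf _ _ HS); auto. Qed.

Lemma rot_cntV a c : a < Mx -> c < Mx -> cnt rV (rot Mx s a) (rot Mx s c) = cnt V a c.
Proof.
  intros. unfold rV. apply rot_cnt; auto.
  - pose proof (Mx_V s Hs). lia.
  - intros v Hv. pose proof (Mx_V v Hv). lia.
Qed.

Lemma rot_long b : In b A -> longb rV (rotp Mx s b) = longb V b.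
Proof.
  intros Hb. unfold longb, rotp. simpl. pose proof (Mx_X b Hb). pose proof (Mx_F b Hb).
  rewrite !rot_cntV by lia. reflexivity.
Qed.

Lemma rot_inter b c : In b A -> In c A -> (inter (rotp Mx s b) (rotp Mx s c) <-> inter b c).
Proof.
  intros Hb Hc. pose proof (Mx_X b Hb). pose proof (Mx_F b Hb). pose proof (Mx_X c Hc).
  pose proof (Mx_F c Hc). pose proof (Mx_V s Hs).
  unfold inter, rotp; simpl. rewrite !rot_btw by lia.
  split; intros [E|E]; try (right; exact E); left.
  - apply rot_inj in E; lia.
  - rewrite E; auto.
Qed.

Lemma rotp_inj b c : In b A -> In c A -> rotp Mx s b = rotp Mx s c -> b = c.
Proof.
  intros Hb Hc E. pose proof (Mx_X b Hb). pose proof (Mx_F b Hb). pose proof (Mx_X c Hc).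
  pose proof (Mx_F c Hc). pose proof (Mx_V s Hs).
  unfold rotp in E. injection E as E1 E2. apply rot_inj in E1; try lia. apply rot_inj in E2; try lia.
  destruct b, c; simpl in *; subst; auto.
Qed.

Lemma in_rA b' : In b' rA -> exists b, b' = rotp Mx s b /\ In b A.
Proof. unfold rA. intros H. apply in_map_iff in H as [b [<- Hb]]. eauto. Qed.

Lemma Star_rot : Star rV rA.
Proof.
  destruct HS as [NV NA HA HSp HE HAx HB]. pose proof (Mx_V s Hs).
  constructor.
  - unfold rV. apply Injective_map_NoDup_in; auto. intros p q Hp Hq E.
    pose proof (Mx_V p Hp). pose proof (Mx_V q Hq). apply rot_inj in E; lia.
  - unfold rA. apply Injective_map_NoDup_in; auto. intros; apply rotp_inj; auto.
  - intros b' Hb'. destruct (in_rA b' Hb') as [b [-> Hb]]. destruct (HA _ Hb) as (H1 & H2 & H3).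
    pose proof (Mx_X b Hb). pose proof (Mx_F b Hb).
    unfold rotp; simpl. split; [|split].
    + unfold rV. apply in_map; auto.
    + destruct (Nat.eq_dec (rot Mx s (snd b)) 0) as [E|E]; [|lia].
      apply rot_zero in E; try lia. rewrite E in H3. contradiction.
    + unfold rV. intros Hm. apply in_map_iff in Hm as [v [E Hv]]. pose proof (Mx_V v Hv).
      apply rot_inj in E; try lia. apply H3. rewrite <- E. exact Hv.
  - intros b' c' Hb' Hc'. destruct (in_rA b' Hb') as [b [-> Hb]]. destruct (in_rA c' Hc') as [c [-> Hc]].
    pose proof (Mx_X b Hb). pose proof (Mx_X c Hc).
    destruct (HSp _ _ Hb Hc) as [Q|[Q|Q]]; unfold rotp, rot; simpl;
    destruct (Nat.leb_spec s (snd b)), (Nat.leb_spec s (snd c)); lia.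
  - intros b' c' Hb' Hc' Hne Hf. destruct (in_rA b' Hb') as [b [-> Hb]]. destruct (in_rA c' Hc') as [c [-> Hc]].
    assert (b <> c) by (intro; subst; auto).
    pose proof (Mx_X b Hb). pose proof (Mx_F b Hb). pose proof (Mx_X c Hc). pose proof (Mx_F c Hc).
    unfold rotp in *; simpl in *. apply rot_inj in Hf; try lia. rewrite rot_cntV by lia. apply HE; auto.
  - intros b' c' Hb' Hc' Hne Hi. destruct (in_rA b' Hb') as [b [-> Hb]]. destruct (in_rA c' Hc') as [c [-> Hc]].
    assert (b <> c) by (intro; subst; auto). apply (proj1 (rot_inter b c Hb Hc)) in Hi.
    pose proof (Mx_X b Hb). pose proof (Mx_F b Hb). pose proof (Mx_X c Hc). pose proof (Mx_F c Hc).
    unfold rotp; simpl. rewrite !rot_cntV by lia. apply HAx; auto.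
  - intros b' c' d' Hb' Hc' Hd' H1 H2 H3 Hf Hi1 Hi2.
    destruct (in_rA b' Hb') as [b [-> Hb]]. destruct (in_rA c' Hc') as [c [-> Hc]].
    destruct (in_rA d' Hd') as [d [-> Hd]].
    apply (proj1 (rot_inter b c Hb Hc)) in Hi1. apply (proj1 (rot_inter b d Hb Hd)) in Hi2.
    pose proof (Mx_F c Hc). pose proof (Mx_F d Hd).
    unfold rotp in Hf; simpl in Hf. apply rot_inj in Hf; try lia.
    apply (HB b c d); auto; intro; subst; auto.
Qed.

Lemma rot_count : length (filter (longb rV) rA) = length (filter (longb V) A).
Proof.
  unfold rA. rewrite filter_map_swap, length_map. f_equal.
  apply filter_ext_in. intros b Hb. apply rot_long; auto.
Qed.
End Rot.

Lemma good_at_zero V A : Star V A -> (exists b, In b A /\ longb V b = true) ->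
  exists V' A' x, Star V' A' /\ length V' = length V /\
    length (filter (longb V') A') = length (filter (longb V) A) /\
    In (0, x) A' /\ 2 <= cnt V' 0 x /\ 2 <= cnt V' x 0 /\
    forall c, In c A' -> longb V' c = true -> fst c <> 0 -> cnt V' 0 (fst c) = 0 -> ~ inter (0,x) c.
Proof.
  intros HS Ex.
  destruct (good_exists V A HS Ex) as [[s x] [Ha [La Hg]]]. simpl in Hg.
  assert (Hs : In s V) by apply (star_arrow_wf _ _ HS _ Ha).
  pose proof (Mx_X V A (s,x) Ha) as Q1. pose proof (Mx_V V A s Hs) as Q2. simpl in Q1.
  assert (E0 : rotp (Mx V A) s (s,x) = (0, rot (Mx V A) s x)) by (unfold rotp; simpl; rewrite rot_s; auto).
  exists (rV V A s), (rA V A s), (rot (Mx V A) s x).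
  split; [apply Star_rot; auto|]. split; [apply length_map|]. split; [apply rot_count; auto|].
  split; [rewrite <- E0; apply in_map; auto|].
  apply longb_iff in La. simpl in La.
  assert (Rc : forall p, p < Mx V A -> cnt (rV V A s) 0 (rot (Mx V A) s p) = cnt V s p
                                  /\ cnt (rV V A s) (rot (Mx V A) s p) 0 = cnt V p s).
  { intros p Hp. rewrite <- (rot_s (Mx V A) s), !rot_cntV; auto; lia. }
  destruct (Rc x ltac:(lia)) as [R1 R2].
  split; [lia|]. split; [lia|].
  intros c' Hc' Lc Hf Cz. destruct (in_rA V A s c' Hc') as [c [-> Hc]].
  rewrite (rot_long V A s HS Hs) in Lc; auto.
  pose proof (Mx_F V A HS c Hc).
  rewrite <- E0, (rot_inter V A s HS Hs); auto. apply Hg; auto.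
  - intro E. apply Hf. unfold rotp; simpl. rewrite E. apply rot_s.
  - unfold rotp in Cz; simpl in Cz. rewrite (proj1 (Rc (fst c) ltac:(lia))) in Cz. exact Cz.
Qed.

(* Induction on the number of vertices: cut along a good long arrow, which by
   [split_sizes] and [bound_split] gives
   #long(V) <= 2 + (2 |VL| - 8) + (2 |VR| - 8) = 2 |V| - 8. *)
Theorem star_long_bound : forall n V A, length V = n -> Star V A ->
  length (filter (longb V) A) <= 2 * n - 8.
Proof.
  intros n. induction n as [n IH] using lt_wf_ind. intros V0 A0 Hn HS0.
  destruct (classic (exists b, In b A0 /\ longb V0 b = true)) as [Ex|NEx].
  2:{ rewrite length_filter_none; [lia|]. intros b Hb.
      destruct (longb V0 b) eqn:E; auto. exfalso; eauto. }
  destruct (good_at_zero V0 A0 HS0 Ex) as (V & A & x & HS & Hlen & Hcnt & Ha & L1 & L2 & Hg).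
  rewrite <- Hcnt.
  assert (B := bound_split V A x HS Ha (conj L1 L2) Hg).
  destruct (split_sizes V A x HS Ha (conj L1 L2)) as (SL & SR & SV).
  assert (IL := IH (length (VL V x)) ltac:(lia) _ _ eq_refl (Star_L V A x HS Ha (conj L1 L2))).
  assert (IR := IH (length (VR V x)) ltac:(lia) _ _ eq_refl (Star_R V A x HS Ha (conj L1 L2))).
  lia.
Qed.
(** * Encoding a concrete star by positions on a circle *)

(* Vertex [k] sits at position [3Qk]; the exit on edge [j] of rank [r] (its
   order among the exits on that edge) at [3Qj + 3r + 1].  With [Q] larger than
   every rank, the positions of vertices and exits follow the boundary order,
   and distinct exits are at least 3 apart. *)
Definition vpos (Q k : nat) : nat := 3 * Q * k.
Definition xpos (Q j r : nat) : nat := 3 * Q * j + 3 * r + 1.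

Lemma vv_lt Q k l : (1 <= Q)%nat -> (vpos Q k < vpos Q l)%nat <-> (k < l)%nat.
Proof. intros. unfold vpos. split; intros; nia. Qed.
Lemma vx_lt Q k j r : (r < Q)%nat -> (vpos Q k < xpos Q j r)%nat <-> (k <= j)%nat.
Proof. intros. unfold vpos, xpos. split; intros; nia. Qed.
Lemma xv_lt Q k j r : (r < Q)%nat -> (xpos Q j r < vpos Q k)%nat <-> (j < k)%nat.
Proof. intros. unfold vpos, xpos. split; intros; nia. Qed.
Lemma xx_lt Q j l r r' : (r < Q)%nat -> (r' < Q)%nat -> (xpos Q j r < xpos Q l r')%nat <-> ((j < l)%nat \/ (j = l /\ (r < r')%nat)).
Proof. intros. unfold xpos. split; intros; [|nia].
  destruct (Nat.lt_total j l) as [H2|[H2|H2]]; [left; auto|right; subst; split; auto; nia|exfalso; nia]. Qed.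
Lemma vv_eq Q k l : (1 <= Q)%nat -> vpos Q k = vpos Q l -> k = l.
Proof. unfold vpos. intros. nia. Qed.
Lemma xx_eq Q j l r r' : (r < Q)%nat -> (r' < Q)%nat -> xpos Q j r = xpos Q l r' -> j = l /\ r = r'.
Proof. unfold xpos. intros. destruct (Nat.lt_total j l) as [H2|[H2|H2]]; [exfalso; nia| |exfalso; nia]. subst. split; auto. lia. Qed.
Lemma vx_neq Q k j r : vpos Q k <> xpos Q j r.
Proof. unfold vpos, xpos. lia. Qed.
Lemma xpos_sep Q j l r r' : (r < Q)%nat -> (r' < Q)%nat ->
  xpos Q j r = xpos Q l r' \/ (xpos Q j r + 2 < xpos Q l r')%nat \/ (xpos Q l r' + 2 < xpos Q j r)%nat.
Proof. intros. unfold xpos. destruct (Nat.lt_total j l) as [H2|[H2|H2]]; [right; left; nia| |right; right; nia].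
  subst. lia. Qed.
Lemma succ_mod_eq m j : (j < m)%nat -> succ_mod m j = if (S j <? m)%nat then S j else 0%nat.
Proof.
  intros. unfold succ_mod. destruct (Nat.ltb_spec (S j) m).
  - apply Nat.mod_small; auto.
  - assert (S j = m) by lia. subst. apply Nat.Div0.mod_same.
Qed.

(* Reading the cyclic order of positions as linear order on the boundary,
   unrolled from a source vertex [i]: [unr i n] is the index of vertex [n]
   counted from [i] (in [i, i + m)). *)
Section Conv.
Variables (m Q : nat).
Hypothesis Hm : (4 <= m)%nat.
Hypothesis HQ : (1 <= Q)%nat.

Definition unr (i n : nat) : nat := if (i <=? n)%nat then n else (n + m)%nat.
Definition pred_m (j : nat) : nat := if (j =? 0)%nat then (m - 1)%nat else (j - 1)%nat.

Ltac order_tac := unfold btw, unr, pred_m in *;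
  repeat match goal with
  | |- context [(vpos Q ?k < vpos Q ?l)%nat] => rewrite (vv_lt Q k l HQ)
  | H : context [(vpos Q ?k < vpos Q ?l)%nat] |- _ => rewrite (vv_lt Q k l HQ) in H
  | H : (?r < Q)%nat |- context [(vpos Q ?k < xpos Q ?j ?r)%nat] => rewrite (vx_lt Q k j r H)
  | H : (?r < Q)%nat, H2 : context [(vpos Q ?k < xpos Q ?j ?r)%nat] |- _ => rewrite (vx_lt Q k j r H) in H2
  | H : (?r < Q)%nat |- context [(xpos Q ?j ?r < vpos Q ?k)%nat] => rewrite (xv_lt Q k j r H)
  | H : (?r < Q)%nat, H2 : context [(xpos Q ?j ?r < vpos Q ?k)%nat] |- _ => rewrite (xv_lt Q k j r H) in H2
  | H : (?r < Q)%nat, H' : (?r' < Q)%nat |- context [(xpos Q ?j ?r < xpos Q ?l ?r')%nat] => rewrite (xx_lt Q j l r r' H H')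
  | H : (?r < Q)%nat, H' : (?r' < Q)%nat, H2 : context [(xpos Q ?j ?r < xpos Q ?l ?r')%nat] |- _ => rewrite (xx_lt Q j l r r' H H') in H2
  end;
  repeat match goal with H : context [if _ then _ else _] |- _ => revert H end;
  repeat match goal with
  | |- context [(?a <=? ?b)%nat] => destruct (Nat.leb_spec a b)
  | |- context [(?a <? ?b)%nat] => destruct (Nat.ltb_spec a b)
  | |- context [(?a =? ?b)%nat] => destruct (Nat.eqb_spec a b)
  end; intros; lia.

Lemma order_vertex_left i k j r : (i < m)%nat -> (k < m)%nat -> (j < m)%nat -> (r < Q)%nat -> k <> i ->
  btw (vpos Q i) (vpos Q k) (xpos Q j r) -> (i < unr i k)%nat /\ (unr i k <= unr i j)%nat.
Proof. intros. order_tac. Qed.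

Lemma order_vertex_right i k j r : (i < m)%nat -> (k < m)%nat -> (j < m)%nat -> (r < Q)%nat ->
  btw (xpos Q j r) (vpos Q k) (vpos Q i) -> (unr i j < unr i k)%nat /\ (unr i k < i + m)%nat.
Proof. intros. order_tac. Qed.

Lemma order_exit_left i l j r r' : (i < m)%nat -> (l < m)%nat -> (j < m)%nat -> (r < Q)%nat -> (r' < Q)%nat ->
  btw (vpos Q i) (xpos Q l r') (xpos Q j r) -> ((i <= unr i l)%nat /\ (unr i l < unr i j)%nat) \/ (l = j /\ (r' < r)%nat).
Proof. intros. order_tac. Qed.

Lemma order_exit_right i l j r r' : (i < m)%nat -> (l < m)%nat -> (j < m)%nat -> (r < Q)%nat -> (r' < Q)%nat ->
  btw (xpos Q j r) (xpos Q l r') (vpos Q i) -> ((unr i j < unr i l)%nat /\ (unr i l < i + m)%nat) \/ (l = j /\ (r < r')%nat).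
Proof. intros. order_tac. Qed.

Lemma succ_after_exit k j r : (k < m)%nat -> (j < m)%nat -> (r < Q)%nat -> k <> succ_mod m j ->
  btw (xpos Q j r) (vpos Q (succ_mod m j)) (vpos Q k).
Proof. intros. rewrite (succ_mod_eq m) in * by auto. order_tac. Qed.

Lemma start_before_exit k j r : (k < m)%nat -> (j < m)%nat -> (r < Q)%nat -> k <> j ->
  btw (vpos Q k) (vpos Q j) (xpos Q j r).
Proof. intros. order_tac. Qed.

Lemma succ_between_exits j l r r' : (j < m)%nat -> (l < m)%nat -> (r < Q)%nat -> (r' < Q)%nat -> j <> l ->
  btw (xpos Q j r) (vpos Q (succ_mod m j)) (xpos Q l r').
Proof. intros. rewrite (succ_mod_eq m) by auto. order_tac. Qed.

Lemma pred_before_exit i j r : (i < m)%nat -> (j < m)%nat -> (r < Q)%nat -> pred_m j <> i -> j <> i ->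
  btw (vpos Q i) (vpos Q (pred_m j)) (xpos Q j r).
Proof. intros. order_tac. Qed.

Lemma succ_lt j : (j < m)%nat -> (succ_mod m j < m)%nat.
Proof. intros. rewrite (succ_mod_eq m) by auto. destruct (Nat.ltb_spec (S j) m); lia. Qed.

Lemma pred_lt j : (j < m)%nat -> (pred_m j < m)%nat.
Proof. intros. unfold pred_m. destruct (Nat.eqb_spec j 0); lia. Qed.

Lemma succ2_after_exit i j r : (i < m)%nat -> (j < m)%nat -> (r < Q)%nat -> succ_mod m (succ_mod m j) <> i -> succ_mod m j <> i ->
  btw (xpos Q j r) (vpos Q (succ_mod m (succ_mod m j))) (vpos Q i).
Proof.
  intros. assert (Hs := succ_lt j H0). rewrite (succ_mod_eq m (succ_mod m j)) in * by auto.
  rewrite (succ_mod_eq m j) in * by auto. order_tac.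
Qed.
End Conv.
Open Scope R_scope.

(** * Orientation in the regular polygon *)

Definition cr (ax ay bx by_ cx cy : R) : R := (bx - ax) * (cy - ay) - (by_ - ay) * (cx - ax).

(* The key identity: sin x + sin y - sin (x + y) = 4 sin(x/2) sin(y/2) sin((x+y)/2). *)
Lemma trig_pos x y : 0 < x -> 0 < y -> x + y < 2*PI -> 0 < sin x + sin y - sin (x + y).
Proof.
  intros Hx Hy Hxy.
  set (p := x/2). set (q := y/2).
  assert (Ex : x = 2*p) by (unfold p; field). assert (Ey : y = 2*q) by (unfold q; field).
  assert (E : sin x + sin y - sin (x + y) = 4 * sin p * sin q * sin (p + q)).
  { rewrite sin_plus, Ex, Ey, !sin_2a, !cos_2a_sin, sin_plus. ring. }
  rewrite E.
  assert (0 < sin p) by (apply sin_gt_0; unfold p; lra).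
  assert (0 < sin q) by (apply sin_gt_0; unfold q; lra).
  assert (0 < sin (p+q)) by (apply sin_gt_0; unfold p, q; lra).
  assert (0 < sin p * sin q) by (apply Rmult_lt_0_compat; auto).
  assert (0 < sin p * sin q * sin (p+q)) by (apply Rmult_lt_0_compat; auto).
  lra.
Qed.

Lemma cr_circle a b g : cr (cos a) (sin a) (cos b) (sin b) (cos g) (sin g) = sin (b - a) + sin (g - b) - sin (g - a).
Proof. unfold cr. rewrite !sin_minus. ring. Qed.

Lemma cr_circle_pos a b g : a < b -> b < g -> g < a + 2*PI -> 0 < cr (cos a) (sin a) (cos b) (sin b) (cos g) (sin g).
Proof.
  intros. rewrite cr_circle. replace (g - a) with ((b - a) + (g - b)) by ring.
  apply trig_pos; lra.
Qed.

Lemma ang_lt m a b : (0 < m)%nat -> (a < b)%nat -> 2*PI*INR a/INR m < 2*PI*INR b/INR m.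
Proof.
  intros Hm Hab. assert (0 < INR m) by (apply lt_0_INR; auto).
  assert (INR a < INR b) by (apply lt_INR; auto).
  unfold Rdiv. apply Rmult_lt_compat_r; [apply Rinv_0_lt_compat; auto|].
  assert (0 < PI) by apply PI_RGT_0. nra.
Qed.

Lemma ang_wrap m a c : (0 < m)%nat -> (c < a + m)%nat -> 2*PI*INR c/INR m < 2*PI*INR a/INR m + 2*PI.
Proof.
  intros Hm H. assert (0 < INR m) by (apply lt_0_INR; auto).
  assert (INR c < INR a + INR m) by (rewrite <- plus_INR; apply lt_INR; auto).
  assert (0 < PI) by apply PI_RGT_0.
  replace (2*PI*INR a/INR m + 2*PI) with (2*PI*(INR a + INR m)/INR m) by (field; lra).
  unfold Rdiv. apply Rmult_lt_compat_r; [apply Rinv_0_lt_compat; auto|]. nra.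
Qed.

Lemma vertex_orient_pos m a b c : (0 < m)%nat -> (a < b)%nat -> (b < c)%nat -> (c < a + m)%nat ->
  0 < cr (vx m a) (vy m a) (vx m b) (vy m b) (vx m c) (vy m c).
Proof.
  intros. unfold vx, vy. apply cr_circle_pos; [apply ang_lt; auto|apply ang_lt; auto|apply ang_wrap; auto].
Qed.

Lemma vertex_period m n : (0 < m)%nat -> vx m (n + m) = vx m n /\ vy m (n + m) = vy m n.
Proof.
  intros Hm. assert (0 < INR m) by (apply lt_0_INR; auto).
  assert (E : 2*PI*INR (n+m)/INR m = 2*PI*INR n/INR m + 2 * INR 1 * PI).
  { rewrite plus_INR. simpl. field. lra. }
  unfold vx, vy. rewrite E, cos_period, sin_period. auto.
Qed.

Lemma cr_affine2 ax ay bx by_ cx cy dx dy u :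
  cr ax ay ((1-u)*bx + u*cx) ((1-u)*by_ + u*cy) dx dy = (1-u) * cr ax ay bx by_ dx dy + u * cr ax ay cx cy dx dy.
Proof. unfold cr. ring. Qed.
Lemma cr_affine3 ax ay bx by_ cx cy dx dy u :
  cr ax ay bx by_ ((1-u)*cx + u*dx) ((1-u)*cy + u*dy) = (1-u) * cr ax ay bx by_ cx cy + u * cr ax ay bx by_ dx dy.
Proof. unfold cr. ring. Qed.
Lemma cr_swap ax ay bx by_ cx cy : cr ax ay bx by_ cx cy = - cr ax ay cx cy bx by_.
Proof. unfold cr. ring. Qed.
Lemma cr_same ax ay bx by_ : cr ax ay bx by_ bx by_ = 0.
Proof. unfold cr. ring. Qed.
Lemma cr_same1 ax ay bx by_ : cr ax ay bx by_ ax ay = 0.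
Proof. unfold cr. ring. Qed.
(* The side of the line through an arrow from vertex [I] exiting the edge
   [J, J+1] at parameter [t] (indices unrolled so that I < J < J + 1 < I + m):
   negative on the boundary chain from [I] to the exit, positive on the other. *)
Section Sign.
Variables (m I J : nat) (t : R).
Hypothesis Hm : (0 < m)%nat.
Hypothesis HIJ : (I < J)%nat.
Hypothesis HJ : (J + 1 < I + m)%nat.
Hypothesis Ht : 0 < t < 1.
Definition Ex := (1-t) * vx m J + t * vx m (J+1).
Definition Ey := (1-t) * vy m J + t * vy m (J+1).
Definition side (X Y : R) := cr (vx m I) (vy m I) Ex Ey X Y.

Lemma side_exp X Y : side X Y = (1-t) * cr (vx m I) (vy m I) (vx m J) (vy m J) X Y + t * cr (vx m I) (vy m I) (vx m (J+1)) (vy m (J+1)) X Y.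
Proof. unfold side, Ex, Ey. apply cr_affine2. Qed.

Lemma side_vertex_neg n : (I < n)%nat -> (n <= J)%nat -> side (vx m n) (vy m n) < 0.
Proof.
  intros H1 H2. rewrite side_exp.
  assert (K2 : cr (vx m I) (vy m I) (vx m (J+1)) (vy m (J+1)) (vx m n) (vy m n) < 0).
  { rewrite cr_swap. assert (0 < cr (vx m I) (vy m I) (vx m n) (vy m n) (vx m (J+1)) (vy m (J+1))) by (apply vertex_orient_pos; lia). lra. }
  assert (K1 : cr (vx m I) (vy m I) (vx m J) (vy m J) (vx m n) (vy m n) <= 0).
  { destruct (Nat.eq_dec n J) as [->|Hn]; [rewrite cr_same; lra|].
    rewrite cr_swap. assert (0 < cr (vx m I) (vy m I) (vx m n) (vy m n) (vx m J) (vy m J)) by (apply vertex_orient_pos; lia). lra. }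
  nra.
Qed.

Lemma side_vertex_pos n : (J < n)%nat -> (n < I + m)%nat -> 0 < side (vx m n) (vy m n).
Proof.
  intros H1 H2. rewrite side_exp.
  assert (K1 : 0 < cr (vx m I) (vy m I) (vx m J) (vy m J) (vx m n) (vy m n)) by (apply vertex_orient_pos; lia).
  assert (K2 : 0 <= cr (vx m I) (vy m I) (vx m (J+1)) (vy m (J+1)) (vx m n) (vy m n)).
  { destruct (Nat.eq_dec n (J+1)) as [->|Hn]; [rewrite cr_same; lra|].
    assert (0 < cr (vx m I) (vy m I) (vx m (J+1)) (vy m (J+1)) (vx m n) (vy m n)) by (apply vertex_orient_pos; lia). lra. }
  nra.
Qed.

Lemma side_source : side (vx m I) (vy m I) = 0.
Proof. unfold side. apply cr_same1. Qed.

Lemma side_source_turn : side (vx m (I+m)) (vy m (I+m)) = 0.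
Proof. destruct (vertex_period m I Hm) as [E1 E2]. rewrite E1, E2. apply side_source. Qed.

Lemma side_vertex_le n : (I <= n)%nat -> (n <= J)%nat -> side (vx m n) (vy m n) <= 0.
Proof.
  intros. destruct (Nat.eq_dec n I) as [->|]; [rewrite side_source; lra|]. left. apply side_vertex_neg; lia.
Qed.

Lemma side_vertex_ge n : (J < n)%nat -> (n <= I + m)%nat -> 0 <= side (vx m n) (vy m n).
Proof.
  intros. destruct (Nat.eq_dec n (I+m)) as [->|]; [rewrite side_source_turn; lra|]. left. apply side_vertex_pos; lia.
Qed.

Lemma side_on_edge u : side ((1-u) * vx m J + u * vx m (J+1)) ((1-u) * vy m J + u * vy m (J+1)) =
  (u - t) * cr (vx m I) (vy m I) (vx m J) (vy m J) (vx m (J+1)) (vy m (J+1)).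
Proof. unfold side, Ex, Ey, cr. ring. Qed.

Lemma side_edge_orient : 0 < cr (vx m I) (vy m I) (vx m J) (vy m J) (vx m (J+1)) (vy m (J+1)).
Proof. apply vertex_orient_pos; lia. Qed.

Lemma side_exit_neg L u : 0 <= u < 1 ->
  ((I <= L)%nat /\ (L < J)%nat /\ ((I < L)%nat \/ 0 < u)) \/ (L = J /\ u < t) ->
  side ((1-u) * vx m L + u * vx m (L+1)) ((1-u) * vy m L + u * vy m (L+1)) < 0.
Proof.
  intros Hu [(H1 & H2 & H3)|[-> H]].
  - unfold side. rewrite cr_affine3. fold (side (vx m L) (vy m L)). fold (side (vx m (L+1)) (vy m (L+1))).
    assert (K2 : side (vx m (L+1)) (vy m (L+1)) < 0) by (apply side_vertex_neg; lia).
    destruct H3 as [H3|H3].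
    + assert (side (vx m L) (vy m L) < 0) by (apply side_vertex_neg; lia). nra.
    + assert (side (vx m L) (vy m L) <= 0) by (apply side_vertex_le; lia). nra.
  - rewrite side_on_edge. assert (K := side_edge_orient). nra.
Qed.

Lemma side_exit_pos L u : 0 <= u < 1 ->
  ((J < L)%nat /\ (L < I + m)%nat) \/ (L = J /\ t < u) ->
  0 < side ((1-u) * vx m L + u * vx m (L+1)) ((1-u) * vy m L + u * vy m (L+1)).
Proof.
  intros Hu [(H1 & H2)|[-> H]].
  - unfold side. rewrite cr_affine3. fold (side (vx m L) (vy m L)). fold (side (vx m (L+1)) (vy m (L+1))).
    assert (side (vx m L) (vy m L) > 0) by (apply side_vertex_pos; lia).
    assert (0 <= side (vx m (L+1)) (vy m (L+1))) by (apply side_vertex_ge; lia). nra.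
  - rewrite side_on_edge. assert (K := side_edge_orient). nra.
Qed.
End Sign.

Lemma frac01 n d : n * (n - d) <= 0 -> d <> 0 -> 0 <= n / d <= 1.
Proof.
  intros H Hd. unfold Rdiv.
  destruct (Rlt_or_le 0 d) as [Hp|Hn].
  - assert (0 < / d) by (apply Rinv_0_lt_compat; auto).
    assert (d * / d = 1) by (field; auto).
    assert (0 <= n <= d) by nra. split; nra.
  - assert (d < 0) by lra.
    assert (/ d < 0) by (apply Rinv_lt_0_compat; auto).
    assert (d * / d = 1) by (field; auto).
    assert (d <= n <= 0) by nra. split; nra.
Qed.

Lemma seg_inter ax ay px py bx by_ qx qy :
  cr ax ay px py bx by_ * cr ax ay px py qx qy < 0 ->
  cr bx by_ qx qy ax ay * cr bx by_ qx qy px py < 0 ->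
  exists X Y, on_seg ax ay px py X Y /\ on_seg bx by_ qx qy X Y.
Proof.
  intros H1 H2.
  set (D := (px - ax) * (qy - by_) - (py - ay) * (qx - bx)).
  set (s1 := cr ax ay px py bx by_). set (s2 := cr bx by_ qx qy ax ay).
  assert (E1 : cr ax ay px py qx qy = s1 + D) by (unfold s1, D, cr; ring).
  assert (E2 : cr bx by_ qx qy px py = s2 - D) by (unfold s2, D, cr; ring).
  rewrite E1 in H1. rewrite E2 in H2. fold s1 in H1. fold s2 in H2.
  assert (HD : D <> 0) by (intro Z; rewrite Z in H1; nra).
  set (mu := s2 / D). set (la := - s1 / D).
  exists (ax + mu * (px - ax)), (ay + mu * (py - ay)). split.
  - exists mu. split; [apply frac01; auto; nra|]. split; reflexivity.
  - exists la. split; [apply frac01; auto; nra|].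
    unfold la, mu, s1, s2, D, cr. split; field; fold D; auto.
Qed.
Lemma vertex_unr m i n : (0 < m)%nat -> vx m (unr m i n) = vx m n /\ vy m (unr m i n) = vy m n.
Proof. intros. unfold unr. destruct (Nat.leb_spec i n); auto. apply vertex_period; auto. Qed.

Lemma vertex_unr_succ m i l : (0 < m)%nat -> (i < m)%nat -> (l < m)%nat ->
  vx m (unr m i l + 1) = vx m (succ_mod m l) /\ vy m (unr m i l + 1) = vy m (succ_mod m l).
Proof.
  intros. unfold succ_mod, unr. destruct (Nat.leb_spec i l).
  - destruct (Nat.lt_ge_cases (S l) m).
    + rewrite Nat.mod_small by auto. replace (l+1)%nat with (S l) by lia. auto.
    + assert (Esl : S l = m) by lia. replace (S l mod m)%nat with 0%nat by (rewrite Esl; symmetry; apply Nat.Div0.mod_same).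
      replace (l+1)%nat with (0 + m)%nat by lia.
      apply vertex_period; auto.
  - rewrite Nat.mod_small by lia. replace (l + m + 1)%nat with (S l + m)%nat by lia. apply vertex_period; auto.
Qed.

Definition Rltb (x y : R) : bool := if Rlt_dec x y then true else false.
Lemma Rltb_iff x y : Rltb x y = true <-> x < y.
Proof. unfold Rltb. destruct (Rlt_dec x y); split; intros; auto; try discriminate; contradiction. Qed.

Definition rank (A : list arrow) (b : arrow) : nat :=
  length (filter (fun c => (Nat.eqb (a_edge c) (a_edge b)) && Rltb (a_par c) (a_par b)) A).

Lemma rank_lt A b : (rank A b < S (length A))%nat.
Proof. unfold rank. pose proof (filter_length_le (fun c => (Nat.eqb (a_edge c) (a_edge b)) && Rltb (a_par c) (a_par b)) A). lia. Qed.

Lemma rank_mono A b c : In c A -> a_edge b = a_edge c -> a_par c < a_par b -> (rank A c < rank A b)%nat.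
Proof.
  intros Hc He Hp. unfold rank. apply length_filter_lt.
  - intros d _ Hd. apply andb_true_iff in Hd as [E1 E2]. apply andb_true_iff. split.
    + apply Nat.eqb_eq in E1. apply Nat.eqb_eq. congruence.
    + apply Rltb_iff in E2. apply Rltb_iff. lra.
  - exists c. split; auto. split.
    + apply andb_true_iff. split; [apply Nat.eqb_eq; auto|apply Rltb_iff; auto].
    + apply andb_false_iff. right. unfold Rltb. destruct (Rlt_dec (a_par c) (a_par c)); auto. lra.
Qed.

Lemma rank_par_lt A b c : In b A -> In c A -> a_edge b = a_edge c -> (rank A c < rank A b)%nat -> a_par c < a_par b.
Proof.
  intros Hb Hc He Hr. destruct (Rlt_or_le (a_par c) (a_par b)) as [|H]; auto. exfalso.
  destruct (Rle_lt_or_eq_dec _ _ H) as [H'|H'].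
  - assert (rank A b < rank A c)%nat by (apply rank_mono; auto). lia.
  - assert (rank A b = rank A c).
    { unfold rank. rewrite He, H'. reflexivity. }
    lia.
Qed.

Lemma rank_par_eq A b c : In b A -> In c A -> a_edge b = a_edge c -> rank A c = rank A b -> a_par c = a_par b.
Proof.
  intros Hb Hc He Hr. destruct (Rtotal_order (a_par c) (a_par b)) as [H|[H|H]]; auto.
  - assert (rank A c < rank A b)%nat by (apply rank_mono; auto). lia.
  - assert (rank A b < rank A c)%nat by (apply rank_mono; auto). lia.
Qed.

Lemma exit_unr m i c : (0 < m)%nat -> (i < m)%nat -> (a_edge c < m)%nat ->
  exit_x m c = (1 - a_par c) * vx m (unr m i (a_edge c)) + a_par c * vx m (unr m i (a_edge c) + 1) /\
  exit_y m c = (1 - a_par c) * vy m (unr m i (a_edge c)) + a_par c * vy m (unr m i (a_edge c) + 1).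
Proof.
  intros. destruct (vertex_unr m i (a_edge c) H) as [E1 E2]. destruct (vertex_unr_succ m i (a_edge c) H H0 H1) as [E3 E4].
  rewrite E1, E2, E3, E4. unfold exit_x, exit_y. split; ring.
Qed.

Lemma J_bound m a : (0 < m)%nat -> valid_arrow m a ->
  (a_src a < unr m (a_src a) (a_edge a))%nat /\ (unr m (a_src a) (a_edge a) + 1 < a_src a + m)%nat.
Proof.
  intros Hm (H1 & H2 & H3 & H4 & H5). rewrite (succ_mod_eq m) in H5 by auto.
  unfold unr. destruct (Nat.leb_spec (a_src a) (a_edge a)); destruct (Nat.ltb_spec (S (a_edge a)) m); lia.
Qed.
(** * The encoding of a fan-crossing free star is an abstract star *)
Section Final.
Variables (m : nat) (A : list arrow).
Hypothesis Hm4 : (4 <= m)%nat.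
Hypothesis HSt : is_star m A.
Hypothesis Hfcf : fan_crossing_free m A.

(* A bound on all ranks. *)
Definition Qv : nat := S (length A).
Lemma Qv_pos : (1 <= Qv)%nat. Proof. unfold Qv. lia. Qed.
Lemma m_pos : (0 < m)%nat. Proof. lia. Qed.
Definition enc (b : arrow) : nat * nat := (vpos Qv (a_src b), xpos Qv (a_edge b) (rank A b)).
Lemma rank_lt_Qv b : (rank A b < Qv)%nat. Proof. apply rank_lt. Qed.

Lemma valid_of b : In b A -> valid_arrow m b.
Proof. intros. destruct HSt as [_ H']. rewrite Forall_forall in H'. auto. Qed.

Definition arrow_side (a : arrow) (X Y : R) := cr (vx m (a_src a)) (vy m (a_src a)) (exit_x m a) (exit_y m a) X Y.

Lemma arrow_side_eq a X Y : valid_arrow m a ->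
  arrow_side a X Y = side m (a_src a) (unr m (a_src a) (a_edge a)) (a_par a) X Y.
Proof.
  intros (H1 & H2 & _). unfold arrow_side, side, Ex, Ey.
  destruct (exit_unr m (a_src a) a m_pos H1 H2) as [E1 E2]. rewrite E1, E2. reflexivity.
Qed.

Ltac sgn_setup a :=
  let Va := fresh "Va" in
  assert (Va := valid_of a ltac:(assumption));
  destruct (J_bound m a m_pos Va) as [?J1 ?J2];
  rewrite (arrow_side_eq a _ _ Va);
  destruct Va as (?V1 & ?V2 & ?V3 & ?V4 & ?V5).

Lemma sgn_v_neg a k : In a A -> (k < m)%nat -> k <> a_src a ->
  btw (vpos Qv (a_src a)) (vpos Qv k) (xpos Qv (a_edge a) (rank A a)) -> arrow_side a (vx m k) (vy m k) < 0.
Proof.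
  intros Ha Hk Hne Hb. sgn_setup a.
  destruct (order_vertex_left m Qv Hm4 Qv_pos _ _ _ _ V1 Hk V2 (rank_lt_Qv a) Hne Hb) as [K1 K2].
  destruct (vertex_unr m (a_src a) k m_pos) as [E1 E2]. rewrite <- E1, <- E2.
  apply (side_vertex_neg m (a_src a) (unr m (a_src a) (a_edge a)) (a_par a) m_pos J1 ltac:(lia) ltac:(lra)); lia.
Qed.

Lemma sgn_v_pos a k : In a A -> (k < m)%nat ->
  btw (xpos Qv (a_edge a) (rank A a)) (vpos Qv k) (vpos Qv (a_src a)) -> 0 < arrow_side a (vx m k) (vy m k).
Proof.
  intros Ha Hk Hb. sgn_setup a.
  destruct (order_vertex_right m Qv Hm4 Qv_pos _ _ _ _ V1 Hk V2 (rank_lt_Qv a) Hb) as [K1 K2].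
  destruct (vertex_unr m (a_src a) k m_pos) as [E1 E2]. rewrite <- E1, <- E2.
  apply (side_vertex_pos m (a_src a) (unr m (a_src a) (a_edge a)) (a_par a) m_pos J1 ltac:(lia) ltac:(lra)); lia.
Qed.

Lemma sgn_x_neg a c : In a A -> In c A ->
  btw (vpos Qv (a_src a)) (xpos Qv (a_edge c) (rank A c)) (xpos Qv (a_edge a) (rank A a)) ->
  arrow_side a (exit_x m c) (exit_y m c) < 0.
Proof.
  intros Ha Hc Hb. assert (Vc := valid_of c Hc). destruct Vc as (Wsrc & Wedge & Wpar & _).
  sgn_setup a.
  destruct (exit_unr m (a_src a) c m_pos V1 Wedge) as [E1 E2]. rewrite E1, E2.
  destruct (order_exit_left m Qv Hm4 Qv_pos _ _ _ _ _ V1 Wedge V2 (rank_lt_Qv a) (rank_lt_Qv c) Hb) as [[K1 K2]|[K1 K2]].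
  - apply (side_exit_neg m (a_src a) (unr m (a_src a) (a_edge a)) (a_par a) m_pos J1 ltac:(lia) ltac:(lra)); [lra|].
    left. split; [lia|split; [lia|right; lra]].
  - apply (side_exit_neg m (a_src a) (unr m (a_src a) (a_edge a)) (a_par a) m_pos J1 ltac:(lia) ltac:(lra)); [lra|].
    right. split; [rewrite K1; auto|]. apply (rank_par_lt A a c); auto.
Qed.

Lemma sgn_x_pos a c : In a A -> In c A ->
  btw (xpos Qv (a_edge a) (rank A a)) (xpos Qv (a_edge c) (rank A c)) (vpos Qv (a_src a)) ->
  0 < arrow_side a (exit_x m c) (exit_y m c).
Proof.
  intros Ha Hc Hb. assert (Vc := valid_of c Hc). destruct Vc as (Wsrc & Wedge & Wpar & _).
  sgn_setup a.
  destruct (exit_unr m (a_src a) c m_pos V1 Wedge) as [E1 E2]. rewrite E1, E2.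
  destruct (order_exit_right m Qv Hm4 Qv_pos _ _ _ _ _ V1 Wedge V2 (rank_lt_Qv a) (rank_lt_Qv c) Hb) as [[K1 K2]|[K1 K2]].
  - apply (side_exit_pos m (a_src a) (unr m (a_src a) (a_edge a)) (a_par a) m_pos J1 ltac:(lia) ltac:(lra)); [lra|]. left. lia.
  - apply (side_exit_pos m (a_src a) (unr m (a_src a) (a_edge a)) (a_par a) m_pos J1 ltac:(lia) ltac:(lra)); [lra|].
    right. split; [rewrite K1; auto|]. apply (rank_par_lt A c a); auto.
Qed.
Lemma sign_pair b c : In b A -> In c A -> inter (enc b) (enc c) -> snd (enc b) <> snd (enc c) ->
  arrow_side b (vx m (a_src c)) (vy m (a_src c)) * arrow_side b (exit_x m c) (exit_y m c) < 0 /\ a_src b <> a_src c.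
Proof.
  intros Hb Hc Hi Hs. assert (Vc := valid_of c Hc). destruct Vc as (Wsrc & _).
  unfold inter, enc in *; simpl in *.
  destruct Hi as [E|[[H1 H2]|[H1 H2]]]; [contradiction| |].
  - assert (Hne : a_src c <> a_src b) by (intro E; rewrite E in H1; clear - H1; unfold btw in H1; lia).
    assert (K1 := sgn_v_neg b (a_src c) Hb Wsrc Hne H1).
    assert (K2 := sgn_x_pos b c Hb Hc H2).
    split; [nra|auto].
  - assert (Hne : a_src c <> a_src b) by (intro E; rewrite E in H2; clear - H2; unfold btw in H2; lia).
    assert (K1 := sgn_x_neg b c Hb Hc H1).
    assert (K2 := sgn_v_pos b (a_src c) Hb Wsrc H2).
    split; [nra|auto].
Qed.

Lemma arrow_eq (b c : arrow) : a_src b = a_src c -> a_edge b = a_edge c -> a_par b = a_par c -> b = c.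
Proof. destruct b, c; simpl; intros; subst; auto. Qed.

Lemma on_seg_end ax ay bx by_ : on_seg ax ay bx by_ bx by_.
Proof. exists 1. split; [lra|split; ring]. Qed.

Lemma inter_intersects b c : In b A -> In c A -> b <> c -> inter (enc b) (enc c) -> intersects m (Arr b) (Arr c).
Proof.
  intros Hb Hc Hne Hi.
  assert (Hneq : Arr b <> Arr c) by (intro E; injection E; auto).
  destruct (classic (snd (enc b) = snd (enc c))) as [E|E].
  - unfold enc in E; simpl in E. destruct (xx_eq Qv _ _ _ _ (rank_lt_Qv b) (rank_lt_Qv c) E) as [E1 E2].
    assert (Ep : a_par c = a_par b) by (apply (rank_par_eq A b c); auto; congruence).
    assert (Ex : exit_x m c = exit_x m b /\ exit_y m c = exit_y m b) by (unfold exit_x, exit_y; rewrite E1, Ep; auto).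
    split; auto. exists (exit_x m b), (exit_y m b). split; [|split].
    + apply on_seg_end.
    + simpl. destruct Ex as [-> ->]. apply on_seg_end.
    + intros [v (_ & _ & _ & I1 & I2)]. simpl in I1, I2. apply Hne. apply arrow_eq; auto; congruence.
  - destruct (sign_pair b c Hb Hc Hi E) as [P1 Hs].
    destruct (sign_pair c b Hc Hb (inter_sym _ _ Hi) (not_eq_sym E)) as [P2 _].
    unfold arrow_side in P1, P2.
    destruct (seg_inter _ _ _ _ _ _ _ _ P1 P2) as [X [Y [S1 S2]]].
    split; auto. exists X, Y. split; [exact S1|split; [exact S2|]].
    intros [v (_ & _ & _ & I1 & I2)]. simpl in I1, I2. apply Hs. congruence.
Qed.

Lemma arrow_meets_exit_edge b : In b A -> intersects m (Arr b) (Edge (a_edge b)).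
Proof.
  intros Hb. destruct (valid_of b Hb) as (V1 & V2 & V3 & V4 & V5).
  split; [discriminate|]. exists (exit_x m b), (exit_y m b). split; [|split].
  - apply on_seg_end.
  - simpl. exists (a_par b). split; [lra|]. unfold exit_x, exit_y. split; reflexivity.
  - intros [v (_ & _ & _ & I1 & I2)]. simpl in I1, I2. destruct I2; congruence.
Qed.

Lemma intersects_sym X Y : intersects m X Y -> intersects m Y X.
Proof.
  intros [Hne [px [py (H1 & H2 & H3)]]]. split; auto. exists px, py. split; auto. split; auto.
  intros [v (Hv & E1 & E2 & I1 & I2)]. apply H3. exists v. auto.
Qed.

Lemma fcf_violation X Y Z v : is_elem m A X -> is_elem m A Y -> is_elem m A Z -> Y <> Z -> (v < m)%nat ->
  incident m Y v -> incident m Z v -> intersects m X Y -> intersects m X Z -> False.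
Proof. intros. apply (Hfcf X Y Z v); auto. Qed.

Definition Venc := map (vpos Qv) (seq 0 m).
Definition Aenc := map enc A.

Lemma inV k : (k < m)%nat -> In (vpos Qv k) Venc.
Proof. intros. unfold Venc. apply in_map. apply in_seq. lia. Qed.

Lemma enc_inj b c : In b A -> In c A -> enc b = enc c -> b = c.
Proof.
  intros Hb Hc E. unfold enc in E. injection E as E1 E2.
  apply vv_eq in E1; [|apply Qv_pos]. destruct (xx_eq Qv _ _ _ _ (rank_lt_Qv b) (rank_lt_Qv c) E2) as [E3 E4].
  apply arrow_eq; auto. symmetry. apply (rank_par_eq A b c); auto; congruence.
Qed.

(* Edge fans: two arrows from one vertex exit through different edges (else the
   common edge crosses both), and an endpoint of one exit edge separates the exits. *)
Lemma encoding_fan_sep b' c' : In b' Aenc -> In c' Aenc -> b' <> c' -> fst b' = fst c' ->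
  (1 <= cnt Venc (snd b') (snd c'))%nat.
Proof.
  unfold Aenc. intros Hb' Hc' Hne Hf.
  apply in_map_iff in Hb' as [b [<- Hb]]. apply in_map_iff in Hc' as [c [<- Hc]].
  assert (Hbc : b <> c) by (intro; subst; auto).
  unfold enc in Hf; simpl in Hf. apply vv_eq in Hf; [|apply Qv_pos].
  destruct (valid_of b Hb) as (V1 & V2 & _). destruct (valid_of c Hc) as (U1 & U2 & _).
  destruct (Nat.eq_dec (a_edge b) (a_edge c)) as [Ee|Ee].
  - exfalso. apply (fcf_violation (Edge (a_edge b)) (Arr b) (Arr c) (a_src b)); simpl; auto.
    all: try (intro E; injection E; auto; fail); try (apply intersects_sym, arrow_meets_exit_edge; auto; fail).
    apply intersects_sym. rewrite Ee. apply arrow_meets_exit_edge; auto.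
  - unfold enc; simpl. apply (cnt_pos _ _ _ (vpos Qv (succ_mod m (a_edge b)))).
    + apply inV. apply (succ_lt m Qv Hm4 Qv_pos); auto.
    + apply (succ_between_exits m Qv Hm4 Qv_pos); auto; try apply rank_lt_Qv; apply Qv_pos.
Qed.

(* An arrow crossing [b] does not start at an endpoint of [b]'s exit edge (else
   [b] crosses that edge and the arrow), so both endpoints separate it. *)
Lemma encoding_cross_sep b' c' : In b' Aenc -> In c' Aenc -> b' <> c' -> inter b' c' ->
  (1 <= cnt Venc (snd b') (fst c') /\ 1 <= cnt Venc (fst c') (snd b'))%nat.
Proof.
  unfold Aenc. intros Hb' Hc' Hne Hi.
  apply in_map_iff in Hb' as [b [<- Hb]]. apply in_map_iff in Hc' as [c [<- Hc]].
  assert (Hbc : b <> c) by (intro; subst; auto).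
  assert (Ig := inter_intersects b c Hb Hc Hbc Hi).
  destruct (valid_of b Hb) as (V1 & V2 & _). destruct (valid_of c Hc) as (U1 & U2 & _).
  destruct (classic (a_src c = a_edge b \/ a_src c = succ_mod m (a_edge b))) as [Hv|Hv].
  - exfalso. apply (fcf_violation (Arr b) (Edge (a_edge b)) (Arr c) (a_src c)); simpl; auto.
    all: try discriminate; try (apply arrow_meets_exit_edge; auto).
  - unfold enc; simpl. split.
    + apply (cnt_pos _ _ _ (vpos Qv (succ_mod m (a_edge b)))).
      * apply inV. apply (succ_lt m Qv Hm4 Qv_pos); auto.
      * apply (succ_after_exit m Qv Hm4 Qv_pos); auto; try apply rank_lt_Qv; try apply Qv_pos;
        intro E; apply Hv; auto.
    + apply (cnt_pos _ _ _ (vpos Qv (a_edge b))).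
      * apply inV; auto.
      * apply (start_before_exit m Qv Hm4 Qv_pos); auto; try apply rank_lt_Qv; try apply Qv_pos;
        intro E; apply Hv; auto.
Qed.

Lemma encoding_star : Star Venc Aenc.
Proof.
  constructor.
  - unfold Venc. apply Injective_map_NoDup_in; [|apply seq_NoDup].
    intros k l _ _ E. apply vv_eq in E; auto. apply Qv_pos.
  - unfold Aenc. apply Injective_map_NoDup_in; [|destruct HSt; auto]. intros. apply enc_inj; auto.
  - intros b' Hb'. unfold Aenc in Hb'. apply in_map_iff in Hb' as [b [<- Hb]].
    destruct (valid_of b Hb) as (V1 & V2 & _). unfold enc; simpl. split; [|split].
    + apply inV; auto.
    + unfold xpos. lia.
    + unfold Venc. intros Hm'. apply in_map_iff in Hm' as [k [E _]]. apply (vx_neq Qv k _ _ E).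
  - intros b' c' Hb' Hc'. unfold Aenc in *.
    apply in_map_iff in Hb' as [b [<- Hb]]. apply in_map_iff in Hc' as [c [<- Hc]].
    unfold enc; simpl. apply xpos_sep; apply rank_lt_Qv.
  - exact encoding_fan_sep.
  - exact encoding_cross_sep.
  -
    intros b' c' d' Hb' Hc' Hd' H1 H2 H3 Hf Hi1 Hi2. unfold Aenc in *.
    apply in_map_iff in Hb' as [b [<- Hb]]. apply in_map_iff in Hc' as [c [<- Hc]].
    apply in_map_iff in Hd' as [d [<- Hd]].
    assert (Hbc : b <> c) by (intro; subst; auto). assert (Hbd : b <> d) by (intro; subst; auto).
    assert (Hcd : c <> d) by (intro; subst; auto).
    unfold enc in Hf; simpl in Hf. apply vv_eq in Hf; [|apply Qv_pos].
    destruct (valid_of c Hc) as (U1 & _).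
    apply (fcf_violation (Arr b) (Arr c) (Arr d) (a_src c)); simpl; auto.
    all: try (intro E; injection E; auto; fail); try (apply inter_intersects; auto; fail).
Qed.

Lemma d_eq i j : (i < m)%nat -> (j < m)%nat -> ((j + m - i) mod m = if (i <=? j)%nat then j - i else j + m - i)%nat.
Proof.
  intros. destruct (Nat.leb_spec i j).
  - replace (j + m - i)%nat with ((j - i) + 1 * m)%nat by lia. rewrite Nat.Div0.mod_add. apply Nat.mod_small. lia.
  - apply Nat.mod_small. lia.
Qed.

Lemma long_neighbours b : In b A -> is_long m b = true ->
  pred_m m (a_edge b) <> a_src b /\ succ_mod m (succ_mod m (a_edge b)) <> a_src b.
Proof.
  intros Hb L. destruct (valid_of b Hb) as (V1 & V2 & V3 & V4 & V5).
  unfold is_long, arrow_length in L. apply Nat.ltb_lt in L. rewrite d_eq in L by auto.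
  assert (Hs := succ_lt m Qv Hm4 Qv_pos (a_edge b) V2).
  rewrite (succ_mod_eq m (succ_mod m (a_edge b))) by auto.
  rewrite (succ_mod_eq m (a_edge b)) in * by auto. unfold pred_m.
  revert L V5 Hs. destruct (Nat.leb_spec (a_src b) (a_edge b)); destruct (Nat.ltb_spec (S (a_edge b)) m);
  try destruct (Nat.ltb_spec (S (S (a_edge b))) m); try destruct (Nat.ltb_spec 1 m);
  destruct (Nat.eqb_spec (a_edge b) 0); intros; lia.
Qed.

(* Long arrows are long in the encoding: the vertices [j-1, j] lie before the
   exit on edge [j], and [j+1, j+2] after it. *)
Lemma encoding_long b : In b A -> is_long m b = true -> longb Venc (enc b) = true.
Proof.
  intros Hb L. destruct (long_neighbours b Hb L) as [F1 F2].
  destruct (valid_of b Hb) as (V1 & V2 & V3 & V4 & V5).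
  assert (Hs := succ_lt m Qv Hm4 Qv_pos (a_edge b) V2).
  assert (Hss := succ_lt m Qv Hm4 Qv_pos _ Hs).
  assert (Hp := pred_lt m Qv Hm4 Qv_pos (a_edge b) V2).
  apply longb_iff. unfold enc; simpl. split.
  - apply (length_filter_two _ _ (vpos Qv (pred_m m (a_edge b))) (vpos Qv (a_edge b))).
    + apply inV; auto.
    + apply inV; auto.
    + intro E. apply vv_eq in E; [|apply Qv_pos]. revert E. unfold pred_m. destruct (Nat.eqb_spec (a_edge b) 0); lia.
    + apply btwb_iff. apply (pred_before_exit m Qv Hm4 Qv_pos); auto; try apply rank_lt_Qv; apply Qv_pos.
    + apply btwb_iff. apply (start_before_exit m Qv Hm4 Qv_pos); auto; try apply rank_lt_Qv; apply Qv_pos.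
  - apply (length_filter_two _ _ (vpos Qv (succ_mod m (a_edge b))) (vpos Qv (succ_mod m (succ_mod m (a_edge b))))).
    + apply inV; auto.
    + apply inV; auto.
    + intro E. apply vv_eq in E; [|apply Qv_pos]. revert E.
      rewrite (succ_mod_eq m (succ_mod m (a_edge b))) by auto. revert Hs.
      rewrite (succ_mod_eq m (a_edge b)) by auto.
      destruct (Nat.ltb_spec (S (a_edge b)) m); intros; try destruct (Nat.ltb_spec 1 m);
      try destruct (Nat.ltb_spec (S (S (a_edge b))) m); lia.
    + apply btwb_iff. apply (succ_after_exit m Qv Hm4 Qv_pos); auto; try apply rank_lt_Qv; try apply Qv_pos.
    + apply btwb_iff. apply (succ2_after_exit m Qv Hm4 Qv_pos); auto; try apply rank_lt_Qv; apply Qv_pos.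
Qed.

End Final.

Theorem lemma2 (m : nat) (A : list arrow) :
  (4 <= m)%nat -> is_star m A -> fan_crossing_free m A ->
  (length (filter (is_long m) A) <= 2 * m - 8)%nat.
Proof.
  intros Hm HSt Hfcf.
  assert (Hsize : length (Venc m A) = m) by (unfold Venc; rewrite length_map, length_seq; auto).
  assert (Habs := star_long_bound m _ _ Hsize (encoding_star m A Hm HSt Hfcf)).
  assert (Hlong : (length (filter (is_long m) A) <= length (filter (longb (Venc m A)) (Aenc A)))%nat).
  { unfold Aenc. rewrite filter_map_swap, length_map. apply length_filter_mono.
    intros b Hb L. apply encoding_long; auto. }
  lia.
Qed.
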